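(* Let $\omega$ be a rectilinearly-convex obstacle and let $S^*$ be a minimum skeleton for $\omega$. Then $|S^*|=1$ if and only if $\omega$ has a diagonal.
   Context: An obstacle $\omega$ is a simple polygon in $\mathbb{R}^2$ (a closed, bounded polygonal region without holes whose boundary does not intersect itself), assumed in general position (no three of its vertices are collinear); vertices and edges of $\omega$ are those of its boundary. $\omega$ is rectilinear if each edge is horizontal or vertical, and a rectilinear obstacle is rectilinearly-convex if any two points of $\omega$ can be joined by a shortest rectilinear path (made of horizontal and vertical segments, of minimum $\ell_1$ length) contained in $\omega$. A corner point of a rectilinear path is a point where a horizontal and a vertical segment of the path meet. A set $S$ of closed line segments is inside $\omega$ if the union of its elements is contained in $\omega$. Such an $S$ is a skeleton for $\omega$ if for every pair of points $p,q$ not in the interior of $\omega$ such that every shortest rectilinear path between $p$ and $q$ with at most one corner point meets the interior of $\omega$, each such path intersects some element of $S$; a minimum skeleton is one with the fewest segments, and $|S|$ is the number of segments. $B(\omega)$ is the smallest closed axis-parallel rectangle containing $\omega$; the extreme edges are the edges of $\omega$ lying on the boundary of $B(\omega)$ (exactly four for a rectilinearly-convex obstacle); an extreme corner is a vertex of $\omega$ that is a common endpoint of two extreme edges (equivalently, a corner of $B(\omega)$ belonging to $\omega$). Two extreme corners are opposite if they are diagonally opposite corners of $B(\omega)$. A diagonal of $\omega$ is a line segment contained in $\omega$ joining a pair of opposite extreme corners. *)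

From HB Require Import structures.
From mathcomp Require Import all_boot all_order all_algebra.
From mathcomp Require Import all_classical all_reals all_analysis.
Set Implicit Arguments. Unset Strict Implicit. Unset Printing Implicit Defensive.
Import Order.TTheory GRing.Theory Num.Theory.
Import numFieldNormedType.Exports.
Local Open Scope classical_set_scope.
Local Open Scope ring_scope.

Section Geom.
Variable R : realType.
Definition pt := (R * R)%type.

Definition seg (a b : pt) : set pt :=
  [set p | exists t : R, 0 <= t <= 1 /\
     p = (a.1 + t * (b.1 - a.1), a.2 + t * (b.2 - a.2))].

Definition vtx (vs : seq pt) (i : nat) : pt := nth (0, 0) vs (i %% size vs).
Definition edge (vs : seq pt) (i : nat) : set pt := seg (vtx vs i) (vtx vs i.+1).
Definition boundary (vs : seq pt) : set pt :=
  [set p | exists2 i, (i < size vs)%N & edge vs i p].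

Definition simple_polygon (vs : seq pt) : Prop :=
  (3 <= size vs)%N /\
  (forall i, (i < size vs)%N -> vtx vs i <> vtx vs i.+1) /\
  (forall i, (i < size vs)%N -> edge vs i `&` edge vs i.+1 = [set vtx vs i.+1]) /\
  (forall i j, (i < size vs)%N -> (j < size vs)%N -> i <> j ->
     j <> (i.+1 %% size vs)%N -> i <> (j.+1 %% size vs)%N ->
     edge vs i `&` edge vs j = set0).

Definition general_position (vs : seq pt) : Prop :=
  forall i j k, (i < size vs)%N -> (j < size vs)%N -> (k < size vs)%N ->
    i <> j -> j <> k -> i <> k ->
    ((vtx vs j).1 - (vtx vs i).1) * ((vtx vs k).2 - (vtx vs i).2)
    - ((vtx vs j).2 - (vtx vs i).2) * ((vtx vs k).1 - (vtx vs i).1) != 0.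

Definition rectilinear_poly (vs : seq pt) : Prop :=
  forall i, (i < size vs)%N ->
    (vtx vs i).1 = (vtx vs i.+1).1 \/ (vtx vs i).2 = (vtx vs i.+1).2.

Definition bounded_set (A : set pt) : Prop :=
  exists M : R, forall q, A q -> `|q.1| <= M /\ `|q.2| <= M.

Definition region (vs : seq pt) : set pt :=
  boundary vs `|`
  [set p | ~ boundary vs p /\
           bounded_set (connected_component (~` boundary vs) p)].

Definition rect_obstacle (vs : seq pt) : Prop :=
  simple_polygon vs /\ general_position vs /\ rectilinear_poly vs.

(* a rectilinear path is given by its start p and its list of further
   corner/vertex points s; consecutive points are distinct and are joined by a
   horizontal or vertical segment *)
Definition rstep (a b : pt) : bool := (a != b) && ((a.1 == b.1) || (a.2 == b.2)).
Definition rpath (p : pt) (s : seq pt) : bool := path rstep p s.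
Definition pend (p : pt) (s : seq pt) : pt := last p s.
(* i-th segment of the path, i < size s *)
Definition pseg (p : pt) (s : seq pt) (i : nat) : set pt :=
  seg (nth p (p :: s) i) (nth p s i).
Definition trace (p : pt) (s : seq pt) : set pt :=
  [set x | x = p \/ exists2 i, (i < size s)%N & pseg p s i x].
Definition l1dist (a b : pt) : R := `|a.1 - b.1| + `|a.2 - b.2|.
Definition plength (p : pt) (s : seq pt) : R := \sum_(d <- pairmap l1dist p s) d.

Definition shortest_rpath (p q : pt) (s : seq pt) : Prop :=
  rpath p s /\ pend p s = q /\
  forall s', rpath p s' -> pend p s' = q -> plength p s <= plength p s'.

Definition pseg_horizontal (p : pt) (s : seq pt) (i : nat) : Prop :=
  (nth p (p :: s) i).2 = (nth p s i).2.
Definition pseg_vertical (p : pt) (s : seq pt) (i : nat) : Prop :=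
  (nth p (p :: s) i).1 = (nth p s i).1.

Definition corner_point (p : pt) (s : seq pt) (x : pt) : Prop :=
  exists i j, [/\ (i < size s)%N, (j < size s)%N,
    pseg_horizontal p s i, pseg_vertical p s j & pseg p s i x /\ pseg p s j x].

Definition at_most_one_corner (p : pt) (s : seq pt) : Prop :=
  forall x y, corner_point p s x -> corner_point p s y -> x = y.

Definition rect_convex (om : set pt) : Prop :=
  forall p q, om p -> om q ->
    exists s, shortest_rpath p q s /\ trace p s `<=` om.

(* a segment is given by its two (distinct) endpoints; S is a finite list of
   segments and |S| = size S *)
Definition inside (om : set pt) (S : seq (pt * pt)) : Prop :=
  forall ab, ab \in S -> ab.1 <> ab.2 /\ seg ab.1 ab.2 `<=` om.

Definition skeleton (om : set pt) (S : seq (pt * pt)) : Prop :=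
  inside om S /\
  forall p q, ~ om^° p -> ~ om^° q ->
    (forall s, shortest_rpath p q s -> at_most_one_corner p s ->
       trace p s `&` om^° !=set0) ->
    forall s, shortest_rpath p q s -> at_most_one_corner p s ->
      exists2 ab, ab \in S & trace p s `&` seg ab.1 ab.2 !=set0.

Definition min_skeleton (om : set pt) (S : seq (pt * pt)) : Prop :=
  skeleton om S /\ forall S', skeleton om S' -> (size S <= size S')%N.

Definition rect (a b c d : R) : set pt :=
  [set p | a <= p.1 <= b /\ c <= p.2 <= d].
Definition is_bbox (om : set pt) (a b c d : R) : Prop :=
  om `<=` rect a b c d /\
  forall a' b' c' d', om `<=` rect a' b' c' d' -> rect a b c d `<=` rect a' b' c' d'.

(* a diagonal: a segment contained in om joining two opposite extreme corners
   (corners of the bounding box that belong to om) *)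
Definition has_diagonal (om : set pt) : Prop :=
  exists a b c d, is_bbox om a b c d /\
   ((om (a, c) /\ om (b, d) /\ seg (a, c) (b, d) `<=` om) \/
    (om (a, d) /\ om (b, c) /\ seg (a, d) (b, c) `<=` om)).
End Geom.

From HB Require Import structures.
From mathcomp Require Import all_boot all_order all_algebra.
From mathcomp Require Import all_classical all_reals all_analysis.
From mathcomp Require Import ring lra.
Set Implicit Arguments. Unset Strict Implicit. Unset Printing Implicit Defensive.
Import Order.TTheory GRing.Theory Num.Theory.
Import numFieldNormedType.Exports.
Local Open Scope classical_set_scope.
Local Open Scope ring_scope.

(* If the obstacle has a diagonal D, then D alone is a skeleton.  By
   rectilinear convexity, a horizontal or vertical chord through an interior
   point stays in the interior until it reaches D, so a blocked straight path
   crosses D.  A shortest path with one corner covers one of the two L-shaped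
   paths from p to q; if that L missed D, its interior point would make its
   corner interior and put p, the corner and q on one side of D, and then the
   other L, which also meets the interior, would force p or q into the
   interior.  The empty family is no skeleton since the obstacle has interior
   points, hence the minimum size is 1.

   Conversely, if one segment uv is a skeleton, the horizontal and the vertical
   line through any interior point are blocked straight paths, so they meet
   uv: the interior lies in the box spanned by u and v.  Every point of the
   obstacle is a limit of interior points (next to an edge, the horizontal ray
   has odd crossing number on one side of it), so the whole obstacle lies in
   that box; as u and v belong to it, the box is B(omega) and uv a diagonal. *)

Section Segments.
Variable R : realType.
Implicit Types (u v w : R) (a b : pt R).

Definition between u v w := (u <= v <= w) \/ (w <= v <= u).

Lemma between_sym u v w : between u v w -> between w v u.
Proof. by rewrite /between; tauto. Qed.

Lemma between_left u w : between u u w.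
Proof. by rewrite /between lexx /=; lra. Qed.

Lemma between_right u w : between u w w.
Proof. by rewrite /between lexx /=; lra. Qed.

Lemma between_affine u v w : between u v w ->
  exists t : R, 0 <= t <= 1 /\ v = u + t * (w - u).
Proof.
move=> uvw; have [uw|uw|uw] := ltgtP u w.
- exists ((v - u) / (w - u)); have wu0 : 0 < w - u by lra.
  case: uvw => H; last lra.
  rewrite divr_ge0 /=; [|lra|lra].
  rewrite ler_pdivrMr // mul1r divfK; [split; lra|by rewrite gt_eqF].
- exists ((u - v) / (u - w)); have wu0 : 0 < u - w by lra.
  case: uvw => H; first lra.
  rewrite divr_ge0 /=; [|lra|lra].
  rewrite ler_pdivrMr // mul1r; split; first lra.
  have -> : w - u = - (u - w) by ring.
  rewrite mulrN divfK; [lra|by rewrite gt_eqF].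
- by exists 0; rewrite lexx ler01; split => //; case: uvw; rewrite uw => H; lra.
Qed.

Lemma between_of_dist u v w : `|u - v| + `|v - w| = `|u - w| -> between u v w.
Proof.
rewrite /between => E.
have [uv|uv] := lerP u v; have [vw|vw] := lerP v w.
- by left; apply/andP.
- have e1 : `|u - v| = v - u by rewrite distrC ger0_norm; lra.
  have e2 : `|v - w| = v - w by rewrite gtr0_norm; lra.
  have [uw|uw] := lerP u w.
  + have e3 : `|u - w| = w - u by rewrite distrC ger0_norm; lra.
    by exfalso; lra.
  + have e3 : `|u - w| = u - w by rewrite gtr0_norm; lra.
    by right; apply/andP; lra.
- have e1 : `|u - v| = u - v by rewrite gtr0_norm; lra.
  have e2 : `|v - w| = w - v by rewrite distrC ger0_norm; lra.
  have [uw|uw] := lerP u w.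
  + have e3 : `|u - w| = w - u by rewrite distrC ger0_norm; lra.
    by left; apply/andP; lra.
  + have e3 : `|u - w| = u - w by rewrite gtr0_norm; lra.
    by right; apply/andP; lra.
- by right; rewrite !ltW.
Qed.

Lemma seg_start a b : seg a b a.
Proof. by exists 0; rewrite lexx ler01 !mul0r !addr0; case: a. Qed.

Lemma seg_end a b : seg a b b.
Proof.
exists 1; rewrite lexx ler01 !mul1r; split => //.
by case: a; case: b => ? ? ? ? /=; congr pair; ring.
Qed.

Lemma seg_sym a b : seg a b = seg b a.
Proof.
suff H a' b' : seg a' b' `<=` seg b' a' by apply/seteqP; split; apply: H.
move=> z [t [t01 ->]]; exists (1 - t); split; first lra.
by congr pair; ring.
Qed.

Lemma seg_between a b (w : pt R) : seg a b w -> between a.1 w.1 b.1 /\ between a.2 w.2 b.2.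
Proof.
move=> [t [/andP [t0 t1] ->]] /=; rewrite /between.
have [h|h] := lerP a.1 b.1; have [h'|h'] := lerP a.2 b.2.
- by split; left; apply/andP; split; nra.
- by split; [left|right]; apply/andP; split; nra.
- by split; [right|left]; apply/andP; split; nra.
- by split; right; apply/andP; split; nra.
Qed.

Lemma hseg_between a b v : a.2 = b.2 -> between a.1 v b.1 -> seg a b (v, a.2).
Proof.
move=> e /between_affine [t [t01 ->]]; exists t; split => //.
by rewrite e subrr mulr0 addr0.
Qed.

Lemma vseg_between a b v : a.1 = b.1 -> between a.2 v b.2 -> seg a b (a.1, v).
Proof.
move=> e /between_affine [t [t01 ->]]; exists t; split => //.
by rewrite e subrr mulr0 addr0.
Qed.

Lemma hseg_y a b (w : pt R) : a.2 = b.2 -> seg a b w -> w.2 = a.2.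
Proof. by move=> e /seg_between [_]; rewrite /between e; lra. Qed.

Lemma vseg_x a b (w : pt R) : a.1 = b.1 -> seg a b w -> w.1 = a.1.
Proof. by move=> e /seg_between [+ _]; rewrite /between e; lra. Qed.

Lemma inner_param_near (t D e : R) : 0 <= t <= 1 -> 0 <= D -> 0 < e ->
  exists t', 0 < t' < 1 /\ `|t' - t| * D < e.
Proof.
move=> /andP [t0 t1] D0 e0; pose q := e / (D + 1).
have q0 : 0 < q by rewrite divr_gt0 //; lra.
have qD : q * (D + 1) = e by rewrite /q mulfVK //; apply/eqP; lra.
pose dl := Num.min (1/4) q.
have dl0 : 0 < dl by rewrite lt_min q0 andbT divr_gt0.
have [dl1 dlq] : dl <= 1/4 /\ dl <= q by split; rewrite ge_min lexx ?orbT.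
have dlD : dl * D < e.
  have : dl * (D + 1) <= q * (D + 1) by rewrite ler_wpM2r //; lra.
  by rewrite qD; nra.
have [le_t|lt_t] := lerP t (1/2).
- exists (t + dl); split; first by apply/andP; lra.
  by rewrite addrAC subrr add0r gtr0_norm.
- exists (t - dl); split; first by apply/andP; lra.
  by rewrite addrAC subrr add0r normrN gtr0_norm.
Qed.

Lemma seg_param_neq (a b : pt R) t : a <> b -> 0 < t < 1 ->
  let w := (a.1 + t * (b.1 - a.1), a.2 + t * (b.2 - a.2)) in w <> a /\ w <> b.
Proof.
move=> ab /andP [t0 t1] w.
have eq0 (c x : R) : c != 0 -> c * x = 0 -> x = 0.
  by move=> nc /eqP; rewrite mulf_eq0 (negbTE nc) => /eqP.
have nt : t != 0 by rewrite gt_eqF.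
have nt' : 1 - t != 0 by apply/eqP; lra.
split=> h; have /= h1 := f_equal fst h; have /= h2 := f_equal snd h; apply: ab.
- have /(eq0 _ _ nt) e1 : t * (b.1 - a.1) = 0 by lra.
  have /(eq0 _ _ nt) e2 : t * (b.2 - a.2) = 0 by lra.
  by rewrite (surjective_pairing a) (surjective_pairing b); congr pair; lra.
- have /(eq0 _ _ nt') e1 : (1 - t) * (b.1 - a.1) = 0 by lra.
  have /(eq0 _ _ nt') e2 : (1 - t) * (b.2 - a.2) = 0 by lra.
  by rewrite (surjective_pairing a) (surjective_pairing b); congr pair; lra.
Qed.

Lemma seg_inner_near (a b w : pt R) e : a <> b -> seg a b w -> 0 < e ->
  exists w' : pt R, [/\ seg a b w', w' <> a, w' <> b, `|w'.1 - w.1| < e & `|w'.2 - w.2| < e].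
Proof.
move=> ab [t [t01 ->]] e0.
have D0 : 0 <= `|b.1 - a.1| + `|b.2 - a.2| by rewrite addr_ge0.
have [t' [t'01 close]] := inner_param_near t01 D0 e0.
have [na nb] := seg_param_neq ab t'01.
exists (a.1 + t' * (b.1 - a.1), a.2 + t' * (b.2 - a.2)); split => //.
- by exists t'; split => //; case/andP: t'01 => ? ?; apply/andP; split; apply: ltW.
- rewrite /= opprD addrACA subrr add0r -mulrBl normrM.
  have : `|t' - t| * `|b.1 - a.1| <= `|t' - t| * (`|b.1 - a.1| + `|b.2 - a.2|).
    by rewrite ler_wpM2l // lerDl.
  lra.
- rewrite /= opprD addrACA subrr add0r -mulrBl normrM.
  have : `|t' - t| * `|b.2 - a.2| <= `|t' - t| * (`|b.1 - a.1| + `|b.2 - a.2|).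
    by rewrite ler_wpM2l // lerDr.
  lra.
Qed.

Lemma not_between (a u w : R) : ~ between u a w -> (a < u /\ a < w) \/ (u < a /\ w < a).
Proof.
rewrite /between => h.
have [h1|h1] := ltP a u; have [h2|h2] := ltP a w.
- by left.
- by case: h; right; apply/andP; lra.
- by case: h; left; apply/andP; lra.
- have [e|ne] := eqVneq a u; first by case: h; right; apply/andP; rewrite e; lra.
  have [e|ne'] := eqVneq a w; first by case: h; left; apply/andP; rewrite e; lra.
  by right; rewrite !lt_neqAle h1 h2 eq_sym ne eq_sym ne'.
Qed.

Lemma between_le_xor (a y b : R) : between a y b -> a != y -> b != y -> (a <= y) (+) (b <= y).
Proof.
case=> /andP [h1 h2] na nb.
- by rewrite h1 /=; apply/negP => h3; move/eqP: nb; apply; apply/eqP; rewrite eq_le h3 h2.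
- by rewrite h1 addbT; apply/negP => h3; move/eqP: na; apply; apply/eqP; rewrite eq_le h3 h2.
Qed.

Lemma between_lt_xor (a y b : R) : between a y b -> a != y -> b != y -> (y < a) (+) (y < b).
Proof.
move=> h na nb; rewrite !ltNge -addbT addbC.
by have := between_le_xor h na nb; case: (a <= y); case: (b <= y).
Qed.

Lemma between_closed (x y s : R) :
  (forall e, 0 < e -> exists2 t, between x t y & `|t - s| < e) -> between x s y.
Proof.
move=> H; apply: contrapT => /not_between [[h1 h2]|[h1 h2]].
- have [t bt] := H (Num.min (x - s) (y - s)) ltac:(by rewrite lt_min !subr_gt0 h1 h2).
  have : Num.min (x - s) (y - s) <= x - s /\ Num.min (x - s) (y - s) <= y - s.
    by rewrite !ge_min !lexx ?orbT.
  by move: bt; rewrite /between ltr_norml; lra.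
- have [t bt] := H (Num.min (s - x) (s - y)) ltac:(by rewrite lt_min !subr_gt0 h1 h2).
  have : Num.min (s - x) (s - y) <= s - x /\ Num.min (s - x) (s - y) <= s - y.
    by rewrite !ge_min !lexx ?orbT.
  by move: bt; rewrite /between ltr_norml; lra.
Qed.

Lemma is_interval_le (c : R) : is_interval [set t : R | t <= c].
Proof. by move=> x y /= hx hy z /andP [h1 h2]; apply: le_trans hy. Qed.

Lemma is_interval_ge (c : R) : is_interval [set t : R | c <= t].
Proof. by move=> x y /= hx hy z /andP [h1 h2]; apply: le_trans h1. Qed.

Lemma unbounded_le (c : R) M : exists2 t, t <= c & M < `|t|.
Proof.
exists (Num.min c (- `|M| - 1)); first by rewrite ge_min lexx.
have : Num.min c (- `|M| - 1) <= - `|M| - 1 by rewrite ge_min lexx orbT.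
by have := ler_norm M; have := normr_ge0 M; rewrite ltr_normr; lra.
Qed.

Lemma unbounded_ge (c : R) M : exists2 t, c <= t & M < `|t|.
Proof.
exists (Num.max c (`|M| + 1)); first by rewrite le_max lexx.
have : `|M| + 1 <= Num.max c (`|M| + 1) by rewrite le_max lexx orbT.
by have := ler_norm M; have := normr_ge0 M; rewrite ltr_normr; lra.
Qed.

Lemma min3_pos (x1 x2 x3 : R) : 0 < x1 -> 0 < x2 -> 0 < x3 ->
  let m := Num.min x1 (Num.min x2 x3) in [/\ 0 < m, m <= x1, m <= x2 & m <= x3].
Proof. by move=> h1 h2 h3 m; rewrite /m !lt_min h1 h2 h3 !ge_min !lexx !orbT. Qed.

End Segments.

Section RectilinearPaths.
Variable R : realType.
Implicit Types (a b p q w x y : pt R) (s : seq (pt R)).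

Lemma l1dist_ge0 a b : 0 <= l1dist a b.
Proof. by rewrite /l1dist addr_ge0. Qed.

Lemma l1distxx a : l1dist a a = 0.
Proof. by rewrite /l1dist !subrr normr0 addr0. Qed.

Lemma l1dist_triangle a b c : l1dist a c <= l1dist a b + l1dist b c.
Proof.
rewrite /l1dist; have := ler_distD b.1 a.1 c.1; have := ler_distD b.2 a.2 c.2.
lra.
Qed.

Lemma plength_cons p x s : plength p (x :: s) = l1dist p x + plength x s.
Proof. by rewrite /plength /= big_cons. Qed.

Lemma l1dist_le_plength p s : l1dist p (pend p s) <= plength p s.
Proof.
elim: s p => [|x s IH] p; first by rewrite /plength /= big_nil l1distxx.
by rewrite plength_cons; have := IH x; have := l1dist_triangle p x (pend x s); lra.
Qed.

Lemma rstepP a b : rstep a b -> a <> b /\ (a.1 = b.1 \/ a.2 = b.2).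
Proof. by case/andP => /eqP ? /orP [/eqP ?|/eqP ?]; split => //; [left|right]. Qed.

Lemma pend_cons p x s : pend p (x :: s) = pend x s.
Proof. by []. Qed.

Lemma rpath_cons p x s : rpath p (x :: s) = rstep p x && rpath x s.
Proof. by []. Qed.

Definition geodesic p s := plength p s = l1dist p (pend p s).

Lemma geodesic_cons p x s : geodesic p (x :: s) ->
  [/\ geodesic x s, between p.1 x.1 (pend x s).1 & between p.2 x.2 (pend x s).2].
Proof.
rewrite /geodesic plength_cons => e.
have h1 := l1dist_le_plength x s; have h2 := l1dist_triangle p x (pend x s).
have e1 : plength x s = l1dist x (pend x s) by have := l1dist_ge0 p x; lra.
have e2 : l1dist p x + l1dist x (pend x s) = l1dist p (pend x s) by rewrite -e1 e.
move: e2; rewrite /l1dist => e2.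
have := ler_distD x.1 p.1 (pend x s).1; have := ler_distD x.2 p.2 (pend x s).2.
by split => //; apply: between_of_dist; lra.
Qed.

Lemma shortest_of_geodesic p q s : rpath p s -> pend p s = q ->
  plength p s = l1dist p q -> shortest_rpath p q s.
Proof.
move=> rp e l; split => //; split => // s' _ e'.
by rewrite l -e'; apply: l1dist_le_plength.
Qed.

Lemma shortest_rpath_geodesic p q s : shortest_rpath p q s -> geodesic p s.
Proof.
move=> [rp [e sh]]; rewrite /geodesic e; apply/eqP; rewrite eq_le.
rewrite -{2}e l1dist_le_plength andbT.
have [epq|ne] := eqVneq p q.
  by rewrite -epq l1distxx; have := sh [::] erefl epq; rewrite /plength big_nil.
have [e1|n1] := eqVneq p.1 q.1.
  have := sh [:: q]; rewrite /rpath /= /rstep ne e1 eqxx /= => /(_ erefl erefl).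
  by rewrite plength_cons /plength big_nil addr0.
have [e2|n2] := eqVneq p.2 q.2.
  have := sh [:: q]; rewrite /rpath /= /rstep ne e2 eqxx orbT /= => /(_ erefl erefl).
  by rewrite plength_cons /plength big_nil addr0.
have := sh [:: (q.1, p.2); q].
rewrite /rpath /= /rstep /= !eqxx /= orbT.
have -> : p != (q.1, p.2) by apply/eqP => h; move: n1; rewrite {1}h /= eqxx.
have -> : (q.1, p.2) != q by apply/eqP => h; move: n2; rewrite -h /= eqxx.
move=> /(_ erefl erefl); rewrite !plength_cons /plength big_nil addr0.
by rewrite /l1dist /= !subrr normr0 addr0 add0r.
Qed.

Lemma nth_cons_shift p x s i : (i < size s)%N ->
  nth p (p :: x :: s) i.+1 = nth x (x :: s) i /\ nth p (x :: s) i.+1 = nth x s i.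
Proof. by move=> hi; rewrite /= !(set_nth_default x) //= ltnW. Qed.

Lemma pseg_cons p x s i : (i < size s)%N -> pseg p (x :: s) i.+1 = pseg x s i.
Proof. by move=> hi; have [e1 e2] := @nth_cons_shift p x s i hi; rewrite /pseg e1 e2. Qed.

Lemma trace_cons p x s : trace x s `<=` trace p (x :: s).
Proof.
move=> w [->|[i hi hw]]; right; first by exists 0%N => //; apply: seg_end.
by exists i.+1; [rewrite /= ltnS|rewrite pseg_cons].
Qed.

Lemma seg_sub_trace_cons p x s : seg p x `<=` trace p (x :: s).
Proof. by move=> w hw; right; exists 0%N. Qed.

Lemma corner_point_cons p x s w : corner_point x s w -> corner_point p (x :: s) w.
Proof.
move=> [i [j [hi hj hh hv [wi wj]]]]; exists i.+1, j.+1.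
have [ei1 ei2] := @nth_cons_shift p x s i hi.
have [ej1 ej2] := @nth_cons_shift p x s j hj.
by split; rewrite /pseg_horizontal /pseg_vertical ?ei1 ?ei2 ?ej1 ?ej2 ?pseg_cons.
Qed.

Lemma at_most_one_corner_cons p x s :
  at_most_one_corner p (x :: s) -> at_most_one_corner x s.
Proof. by move=> H u v hu hv; apply: H; apply: corner_point_cons. Qed.

Lemma corner_point_hv p x y s : x.2 = p.2 -> y.1 = x.1 ->
  corner_point p (x :: y :: s) x.
Proof. by move=> h v; exists 0%N, 1%N; split => //; split; [apply: seg_end|apply: seg_start]. Qed.

Lemma corner_point_vh p x y s : x.1 = p.1 -> y.2 = x.2 ->
  corner_point p (x :: y :: s) x.
Proof. by move=> h v; exists 1%N, 0%N; split => //; split; [apply: seg_start|apply: seg_end]. Qed.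

Lemma geodesic_hor_trace p s : geodesic p s -> p.2 = (pend p s).2 ->
  (forall w, trace p s w -> w.2 = p.2) /\
  forall v, between p.1 v (pend p s).1 -> trace p s (v, p.2).
Proof.
elim: s p => [|x s IH] p.
  move=> _ _; split; first by move=> w [->|[i]].
  by rewrite /pend /= /between => v hv; left; case: p hv => a b /= hv; congr pair; lra.
move=> /geodesic_cons [g b1 b2] /= e.
have ex : x.2 = p.2 by move: b2; rewrite /between -e; lra.
have [IH1 IH2] := IH x g (etrans ex e).
split.
- move=> w [->//|[[|i] hi hw]]; first by move: hw => /hseg_y ->.
  by rewrite -ex; apply: IH1; right; exists i => //; rewrite -(pseg_cons p).
- move=> v hv; have [h|h] : between p.1 v x.1 \/ between x.1 v (pend x s).1.
    by move: hv b1; rewrite /between; lra.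
  + by apply: seg_sub_trace_cons; apply: hseg_between.
  + by apply: trace_cons; rewrite -ex; apply: IH2.
Qed.

Lemma geodesic_ver_trace p s : geodesic p s -> p.1 = (pend p s).1 ->
  (forall w, trace p s w -> w.1 = p.1) /\
  forall v, between p.2 v (pend p s).2 -> trace p s (p.1, v).
Proof.
elim: s p => [|x s IH] p.
  move=> _ _; split; first by move=> w [->|[i]].
  by rewrite /pend /= /between => v hv; left; case: p hv => a b /= hv; congr pair; lra.
move=> /geodesic_cons [g b1 b2] /= e.
have ex : x.1 = p.1 by move: b1; rewrite /between -e; lra.
have [IH1 IH2] := IH x g (etrans ex e).
split.
- move=> w [->//|[[|i] hi hw]]; first by move: hw => /vseg_x ->.
  by rewrite -ex; apply: IH1; right; exists i => //; rewrite -(pseg_cons p).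
- move=> v hv; have [h|h] : between p.2 v x.2 \/ between x.2 v (pend x s).2.
    by move: hv b2; rewrite /between; lra.
  + by apply: seg_sub_trace_cons; apply: vseg_between.
  + by apply: trace_cons; rewrite -ex; apply: IH2.
Qed.

Definition elbow_hv p q : set (pt R) :=
  [set w | (between p.1 w.1 q.1 /\ w.2 = p.2) \/ (w.1 = q.1 /\ between p.2 w.2 q.2)].
Definition elbow_vh p q : set (pt R) :=
  [set w | (w.1 = p.1 /\ between p.2 w.2 q.2) \/ (between p.1 w.1 q.1 /\ w.2 = q.2)].

Lemma elbow_hvC p q : elbow_hv p q = elbow_vh q p.
Proof.
apply/seteqP; split => w.
- by case=> [[h1 h2]|[h1 h2]]; [right|left]; split => //; apply: between_sym.
- by case=> [[h1 h2]|[h1 h2]]; [right|left]; split => //; apply: between_sym.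
Qed.

Lemma elbow_hv_cons p x q s : x.2 = p.2 -> between p.1 x.1 q.1 ->
  elbow_hv x q `<=` trace x s -> elbow_hv p q `<=` trace p (x :: s).
Proof.
move=> ex bx L w [[hw1 hw2]|[hw1 hw2]]; last first.
  by apply: trace_cons; apply: L; right; rewrite ex.
have [h|h] : between p.1 w.1 x.1 \/ between x.1 w.1 q.1.
  by move: hw1 bx; rewrite /between; lra.
- by apply: seg_sub_trace_cons; rewrite (surjective_pairing w) hw2; apply: hseg_between.
- by apply: trace_cons; apply: L; left; rewrite ex.
Qed.

Lemma elbow_vh_cons p x q s : x.1 = p.1 -> between p.2 x.2 q.2 ->
  elbow_vh x q `<=` trace x s -> elbow_vh p q `<=` trace p (x :: s).
Proof.
move=> ex bx L w [[hw1 hw2]|[hw1 hw2]]; last first.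
  by apply: trace_cons; apply: L; right; rewrite ex.
have [h|h] : between p.2 w.2 x.2 \/ between x.2 w.2 q.2.
  by move: hw2 bx; rewrite /between; lra.
- by apply: seg_sub_trace_cons; rewrite (surjective_pairing w) hw1; apply: vseg_between.
- by apply: trace_cons; apply: L; left; rewrite ex.
Qed.

Lemma elbow_hv_turn p x s : geodesic x s -> x.2 = p.2 -> x.1 = (pend x s).1 ->
  elbow_hv p (pend x s) `<=` trace p (x :: s).
Proof.
move=> g ex xq w [[hw1 hw2]|[hw1 hw2]].
- apply: seg_sub_trace_cons; rewrite (surjective_pairing w) hw2.
  by apply: hseg_between; rewrite ?xq.
- have [_ T] := geodesic_ver_trace g xq.
  by apply: trace_cons; rewrite (surjective_pairing w) hw1 -xq; apply: T; rewrite ex.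
Qed.

Lemma elbow_vh_turn p x s : geodesic x s -> x.1 = p.1 -> x.2 = (pend x s).2 ->
  elbow_vh p (pend x s) `<=` trace p (x :: s).
Proof.
move=> g ex xq w [[hw1 hw2]|[hw1 hw2]].
- apply: seg_sub_trace_cons; rewrite (surjective_pairing w) hw1.
  by apply: vseg_between; rewrite ?xq.
- have [_ T] := geodesic_hor_trace g xq.
  by apply: trace_cons; rewrite (surjective_pairing w) hw2 -xq; apply: T; rewrite ex.
Qed.

Lemma geodesic_elbow p x s : rpath p (x :: s) -> geodesic p (x :: s) ->
  at_most_one_corner p (x :: s) ->
  p.1 <> (pend x s).1 -> p.2 <> (pend x s).2 ->
  (x.2 = p.2 -> elbow_hv p (pend x s) `<=` trace p (x :: s) /\
                corner_point p (x :: s) ((pend x s).1, p.2)) /\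
  (x.1 = p.1 -> elbow_vh p (pend x s) `<=` trace p (x :: s) /\
                corner_point p (x :: s) (p.1, (pend x s).2)).
Proof.
elim: s p x => [|y s IH] p x rp g am n1 n2.
  by split => e; exfalso; [apply: n2|apply: n1].
have [g' bx1 bx2] := geodesic_cons g.
have [_ by1 by2] := geodesic_cons g'.
have am' := at_most_one_corner_cons am.
move: rp; rewrite rpath_cons => /andP [_ rp].
have [_ xy] := rstepP (elimT andP rp).1.
have {}IH := IH x y rp g' am'.
rewrite pend_cons in n1 n2 bx1 bx2 *.
split => ex.
- have nx2 : x.2 <> (pend y s).2 by rewrite ex.
  have [xq|xq] := eqVneq x.1 (pend y s).1.
    have yx : y.1 = x.1 by move: by1; rewrite /between -xq; lra.
    split; first exact: (@elbow_hv_turn p x (y :: s)).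
    by rewrite -xq -ex -surjective_pairing; apply: corner_point_hv.
  case: xy => yx.
  + have [_ /(corner_point_cons p) C] := (IH (elimN eqP xq) nx2).2 (esym yx).
    by have := am _ _ (corner_point_hv s ex (esym yx)) C => /(f_equal snd).
  + have [L C] := (IH (elimN eqP xq) nx2).1 (esym yx).
    by split; [apply: elbow_hv_cons L|rewrite -ex; apply: corner_point_cons].
- have nx1 : x.1 <> (pend y s).1 by rewrite ex.
  have [xq|xq] := eqVneq x.2 (pend y s).2.
    have yx : y.2 = x.2 by move: by2; rewrite /between -xq; lra.
    split; first exact: (@elbow_vh_turn p x (y :: s)).
    by rewrite -xq -ex -surjective_pairing; apply: corner_point_vh.
  case: xy => yx.
  + have [L C] := (IH nx1 (elimN eqP xq)).2 (esym yx).
    by split; [apply: elbow_vh_cons L|rewrite -ex; apply: corner_point_cons].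
  + have [_ /(corner_point_cons p) C] := (IH nx1 (elimN eqP xq)).1 (esym yx).
    by have := am _ _ (corner_point_vh s ex (esym yx)) C => /(f_equal fst).
Qed.

Lemma nil_path p :
  [/\ shortest_rpath p p [::], at_most_one_corner p [::] & trace p [::] `<=` [set p]].
Proof.
split; first by apply: shortest_of_geodesic; rewrite // /plength big_nil l1distxx.
- by move=> u v [i [j []]].
- by move=> w [->|[]].
Qed.

Lemma hsegment_path p q : p.2 = q.2 -> p <> q ->
  [/\ shortest_rpath p q [:: q], at_most_one_corner p [:: q] &
      trace p [:: q] `<=` [set w | between p.1 w.1 q.1 /\ w.2 = p.2]].
Proof.
move=> e ne; split.
- apply: shortest_of_geodesic => //.
    by rewrite /rpath /= /rstep e eqxx orbT !andbT; apply/eqP.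
  by rewrite plength_cons /plength big_nil addr0.
- move=> u v [i [j [_ + _ + _]]] _; rewrite /= ltnS leqn0 => /eqP ->.
  rewrite /pseg_vertical /= => h1.
  by case: ne; rewrite (surjective_pairing p) (surjective_pairing q) h1 e.
- move=> w [->|[i]]; first by split => //; apply: between_left.
  rewrite /= ltnS leqn0 => /eqP -> /=; rewrite /pseg /= => /seg_between [h1 h2].
  by split => //; move: h2; rewrite /between e; lra.
Qed.

Lemma vsegment_path p q : p.1 = q.1 -> p <> q ->
  [/\ shortest_rpath p q [:: q], at_most_one_corner p [:: q] &
      trace p [:: q] `<=` [set w | w.1 = p.1 /\ between p.2 w.2 q.2]].
Proof.
move=> e ne; split.
- apply: shortest_of_geodesic => //.
    by rewrite /rpath /= /rstep e eqxx orTb !andbT; apply/eqP.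
  by rewrite plength_cons /plength big_nil addr0.
- move=> u v [i [j [+ _ + _ _]]] _; rewrite /= ltnS leqn0 => /eqP ->.
  rewrite /pseg_horizontal /= => h1.
  by case: ne; rewrite (surjective_pairing p) (surjective_pairing q) h1 e.
- move=> w [->|[i]]; first by split => //; apply: between_left.
  rewrite /= ltnS leqn0 => /eqP -> /=; rewrite /pseg /= => /seg_between [h1 h2].
  by split => //; move: h1; rewrite /between e; lra.
Qed.

Lemma elbow_hv_path p q : p.1 <> q.1 -> p.2 <> q.2 -> let s := [:: (q.1, p.2); q] in
  [/\ shortest_rpath p q s, at_most_one_corner p s & trace p s `<=` elbow_hv p q].
Proof.
move=> n1 n2 s; split.
- apply: shortest_of_geodesic => //.
    have h1 : p != (q.1, p.2) by apply/eqP => h; apply: n1; rewrite {1}h.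
    have h2 : (q.1, p.2) != q by apply/eqP => h; apply: n2; rewrite -h.
    by rewrite /rpath /= /rstep h1 h2 /= !eqxx !orbT.
  by rewrite !plength_cons /plength big_nil /l1dist /= !subrr normr0 !addr0 add0r.
- suff C w : corner_point p s w -> w = (q.1, p.2) by move=> u v /C -> /C ->.
  move=> [i [j [+ + + + [+ +]]]]; rewrite /= !ltnS.
  case: i => [|[|//]] _; case: j => [|[|//]] _;
    rewrite /pseg_horizontal /pseg_vertical /pseg /= => hh hv wi wj //.
  by rewrite (surjective_pairing w) (vseg_x _ wj) // (hseg_y _ wi).
- move=> w [->|[i]]; first by left; split => //; apply: between_left.
  rewrite /= ltnS; case: i => [|[|//]] _; rewrite /pseg /= => /seg_between [h1 h2].
  + by left; split => //; move: h2; rewrite /between; lra.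
  + by right; split => //; move: h1; rewrite /between; lra.
Qed.

Lemma elbow_vh_path p q : p.1 <> q.1 -> p.2 <> q.2 -> let s := [:: (p.1, q.2); q] in
  [/\ shortest_rpath p q s, at_most_one_corner p s & trace p s `<=` elbow_vh p q].
Proof.
move=> n1 n2 s; split.
- apply: shortest_of_geodesic => //.
    have h1 : p != (p.1, q.2) by apply/eqP => h; apply: n2; rewrite {1}h.
    have h2 : (p.1, q.2) != q by apply/eqP => h; apply: n1; rewrite -h.
    by rewrite /rpath /= /rstep h1 h2 /= !eqxx !orbT.
  by rewrite !plength_cons /plength big_nil /l1dist /= !subrr normr0 !addr0 add0r addrC.
- suff C w : corner_point p s w -> w = (p.1, q.2) by move=> u v /C -> /C ->.
  move=> [i [j [+ + + + [+ +]]]]; rewrite /= !ltnS.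
  case: i => [|[|//]] _; case: j => [|[|//]] _;
    rewrite /pseg_horizontal /pseg_vertical /pseg /= => hh hv wi wj //.
  by rewrite (surjective_pairing w) (vseg_x _ wj) // (hseg_y _ wi).
- move=> w [->|[i]]; first by left; split => //; apply: between_left.
  rewrite /= ltnS; case: i => [|[|//]] _; rewrite /pseg /= => /seg_between [h1 h2].
  + by left; split => //; move: h1; rewrite /between; lra.
  + by right; split => //; move: h2; rewrite /between; lra.
Qed.

Lemma shortest_hor_trace p q s : shortest_rpath p q s -> p.2 = q.2 ->
  forall v, between p.1 v q.1 -> trace p s (v, p.2).
Proof.
move=> sh e; have g := shortest_rpath_geodesic sh; case: sh => _ [ep _].
by have [_] := geodesic_hor_trace g (etrans e (esym (f_equal snd ep))); rewrite ep.
Qed.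

Lemma shortest_ver_trace p q s : shortest_rpath p q s -> p.1 = q.1 ->
  forall v, between p.2 v q.2 -> trace p s (p.1, v).
Proof.
move=> sh e; have g := shortest_rpath_geodesic sh; case: sh => _ [ep _].
by have [_] := geodesic_ver_trace g (etrans e (esym (f_equal fst ep))); rewrite ep.
Qed.

Lemma shortest_one_corner_elbow p q s : shortest_rpath p q s ->
  at_most_one_corner p s -> p.1 <> q.1 -> p.2 <> q.2 ->
  elbow_hv p q `<=` trace p s \/ elbow_vh p q `<=` trace p s.
Proof.
move=> sh am n1 n2; have g := shortest_rpath_geodesic sh; case: sh => rp [ep _].
case: s rp g am ep => [|x s] rp g am ep; first by case: n1; rewrite -ep.
rewrite -ep pend_cons in n1 n2 *.
have [hv vh] := geodesic_elbow rp g am n1 n2.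
move: rp; rewrite rpath_cons => /andP [/rstepP [_ [e|e]] _].
- by right; case: (vh (esym e)).
- by left; case: (hv (esym e)).
Qed.

Lemma nbhs_boxP (A : set (pt R)) p : nbhs p A <->
  exists2 e : R, 0 < e & forall q, `|q.1 - p.1| < e -> `|q.2 - p.2| < e -> A q.
Proof.
split.
- move=> /nbhs_ballP [e e0 H]; exists e => // q h1 h2.
  by apply: H; split => /=; rewrite /ball /= distrC.
- move=> [e e0 H]; apply/nbhs_ballP; exists e => //= q [h1 h2].
  by apply: H; rewrite distrC.
Qed.

Lemma nbhs_box_and (P Q : set (pt R)) p : nbhs p P -> nbhs p Q ->
  exists2 e : R, 0 < e & forall q, `|q.1 - p.1| < e -> `|q.2 - p.2| < e -> P q /\ Q q.
Proof. by move=> hP hQ; apply/nbhs_boxP; apply: filterI. Qed.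

Lemma hline_connected (J : set R) (y : R) : is_interval J ->
  connected [set z : pt R | J z.1 /\ z.2 = y].
Proof.
move=> iJ; have -> : [set z : pt R | J z.1 /\ z.2 = y] = (fun t => (t, y)) @` J.
  by apply/seteqP; split => [[a b] /= [Ja ->]|z [t Jt <-]] //; exists a.
apply: connected_continuous_connected; first exact/connected_intervalP.
apply: continuous_subspaceT => t.
exact: (@cvg_pair _ _ _ _ _ _ _ _ _ (fun t => t) (fun _ => y) cvg_id (cvg_cst y)).
Qed.

Lemma vline_connected (J : set R) (x : R) : is_interval J ->
  connected [set z : pt R | z.1 = x /\ J z.2].
Proof.
move=> iJ; have -> : [set z : pt R | z.1 = x /\ J z.2] = (fun t => (x, t)) @` J.
  by apply/seteqP; split => [[a b] /= [-> Ja]|z [t Jt <-]] //; exists b.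
apply: connected_continuous_connected; first exact/connected_intervalP.
apply: continuous_subspaceT => t.
exact: (@cvg_pair _ _ _ _ _ _ _ _ _ (fun _ => x) (fun t => t) (cvg_cst x) cvg_id).
Qed.

End RectilinearPaths.

Section NearPoint.
Variable R : realType.
Implicit Types (r : pt R) (a u w : R).

Lemma near_forall_lt (n : nat) (P : nat -> pt R -> Prop) r :
  (forall i, (i < n)%N -> \forall r' \near r, P i r') ->
  \forall r' \near r, forall i, (i < n)%N -> P i r'.
Proof.
elim: n => [|n IH] H; first by apply/nbhs_boxP; exists 1 => // r' _ _ i; rewrite ltn0.
apply: filterS (filterI (IH (fun i hi => H i (ltnW hi))) (H n (ltnSn n))).
by move=> r' [h1 h2] i; rewrite ltnS leq_eqVlt => /orP [/eqP ->//|/h1].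
Qed.

Lemma near_x_lt a r : r.1 < a -> \forall r' \near r, r'.1 < a.
Proof.
move=> h; apply/nbhs_boxP; exists (a - r.1); first by rewrite subr_gt0.
by move=> r' h1 _; move: h1; rewrite ltr_norml; lra.
Qed.

Lemma near_x_gt a r : a < r.1 -> \forall r' \near r, a < r'.1.
Proof.
move=> h; apply/nbhs_boxP; exists (r.1 - a); first by rewrite subr_gt0.
by move=> r' h1 _; move: h1; rewrite ltr_norml; lra.
Qed.

Lemma near_y_lt a r : r.2 < a -> \forall r' \near r, r'.2 < a.
Proof.
move=> h; apply/nbhs_boxP; exists (a - r.2); first by rewrite subr_gt0.
by move=> r' _ h1; move: h1; rewrite ltr_norml; lra.
Qed.

Lemma near_y_gt a r : a < r.2 -> \forall r' \near r, a < r'.2.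
Proof.
move=> h; apply/nbhs_boxP; exists (r.2 - a); first by rewrite subr_gt0.
by move=> r' _ h1; move: h1; rewrite ltr_norml; lra.
Qed.

Lemma near_x_ltE a r : a != r.1 -> \forall r' \near r, (r'.1 < a) = (r.1 < a).
Proof.
rewrite neq_lt => /orP [h|h].
- by apply: filterS (near_x_gt h) => r' h'; rewrite !ltNge (ltW h) (ltW h').
- by apply: filterS (near_x_lt h) => r' h'; rewrite h h'.
Qed.

Lemma near_y_leE a r :
  \forall r' \near r, (a <= r'.2) = (a <= r.2) (+) ((r'.2 < r.2) && (a == r.2)).
Proof.
have [->|ne] := eqVneq a r.2.
  by apply/nbhs_boxP; exists 1 => // r' _ _ /=; rewrite lexx andbT leNgt.
have := ne; rewrite neq_lt => /orP [h|h].
- apply: filterS (near_y_gt h) => r' h' /=.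
  by rewrite andbF addbF (ltW h) (ltW h').
- apply: filterS (near_y_lt h) => r' h' /=.
  by rewrite andbF addbF !leNgt h h'.
Qed.

Lemma near_not_between_x u w r : ~ between u r.1 w ->
  \forall r' \near r, ~ between u r'.1 w.
Proof.
move=> /not_between [[h1 h2]|[h1 h2]].
- by apply: filterS (filterI (near_x_lt h1) (near_x_lt h2)) => r' [a b];
    rewrite /between; lra.
- by apply: filterS (filterI (near_x_gt h1) (near_x_gt h2)) => r' [a b];
    rewrite /between; lra.
Qed.

Lemma near_not_between_y u w r : ~ between u r.2 w ->
  \forall r' \near r, ~ between u r'.2 w.
Proof.
move=> /not_between [[h1 h2]|[h1 h2]].
- by apply: filterS (filterI (near_y_lt h1) (near_y_lt h2)) => r' [a b];
    rewrite /between; lra.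
- by apply: filterS (filterI (near_y_gt h1) (near_y_gt h2)) => r' [a b];
    rewrite /between; lra.
Qed.

End NearPoint.

Section Polygon.
Variable R : realType.
Variable vs : seq (pt R).
Hypothesis Hvs : rect_obstacle vs.
Implicit Types (r w : pt R) (i j : nat).

Local Notation n := (size vs).
Local Notation v := (vtx vs).

Lemma size_gt0 : (0 < n)%N.
Proof. by case: Hvs => [[h _] _]; apply: leq_trans h. Qed.

Lemma vtx_mod i : v (i %% n)%N = v i.
Proof. by rewrite /vtx modn_mod. Qed.

Lemma vtx_size : v n = v 0.
Proof. by rewrite /vtx modnn mod0n. Qed.

Lemma vtx_modS i : v (i %% n)%N.+1 = v i.+1.
Proof. by rewrite /vtx -[((i %% n)%N).+1]addn1 modnDml addn1. Qed.

Lemma edge_mod i : edge vs (i %% n)%N = edge vs i.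
Proof. by rewrite /edge vtx_mod vtx_modS. Qed.

Lemma vtx_all (P : pt R -> Prop) : (forall i, (i < n)%N -> P (v i)) -> forall i, P (v i).
Proof. by move=> H i; rewrite -vtx_mod; apply: H; rewrite ltn_mod size_gt0. Qed.

Lemma vtx_neq_succ i : v i <> v i.+1.
Proof.
case: Hvs => [[_ [h _]] _].
by have := h (i %% n)%N; rewrite ltn_mod size_gt0 vtx_mod vtx_modS; apply.
Qed.

Lemma vtx_axis_parallel i : (v i).1 = (v i.+1).1 \/ (v i).2 = (v i.+1).2.
Proof.
case: Hvs => [_ [_ h]].
by have := h (i %% n)%N; rewrite ltn_mod size_gt0 vtx_mod vtx_modS; apply.
Qed.

Definition vertical i := (v i).1 == (v i.+1).1.

Lemma horizontal_edge i : ~~ vertical i -> (v i).2 = (v i.+1).2.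
Proof. by move=> /eqP nv; case: (vtx_axis_parallel i). Qed.

Lemma edgeP i w : edge vs i w <->
  between (v i).1 w.1 (v i.+1).1 /\ between (v i).2 w.2 (v i.+1).2.
Proof.
split; first exact: seg_between.
move=> [h1 h2]; case: (vtx_axis_parallel i) => e.
- have e' : w.1 = (v i).1 by move: h1; rewrite /between e; lra.
  by rewrite (surjective_pairing w) e'; apply: vseg_between.
- have e' : w.2 = (v i).2 by move: h2; rewrite /between e; lra.
  by rewrite (surjective_pairing w) e'; apply: hseg_between.
Qed.

Lemma edge_x i w : edge vs i w -> between (v i).1 w.1 (v i.+1).1.
Proof. by case/edgeP. Qed.

Lemma edge_y i w : edge vs i w -> between (v i).2 w.2 (v i.+1).2.
Proof. by case/edgeP. Qed.

Lemma not_edge_other i0 j w : (i0 < n)%N -> (j < n)%N -> j <> i0 -> edge vs i0 w ->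
  w <> v i0 -> w <> v i0.+1 -> ~ edge vs j w.
Proof.
case: Hvs => [[_ [_ [Hnext Hfar]]] _] hi hj ne e0 n0 n1 ej.
have [e1|n2] := eqVneq j (i0.+1 %% n)%N.
  have : (edge vs i0 `&` edge vs i0.+1) w by split => //; rewrite -edge_mod -e1.
  by rewrite Hnext.
have [e2|n3] := eqVneq i0 (j.+1 %% n)%N.
  have : (edge vs j `&` edge vs j.+1) w by split => //; rewrite -edge_mod -e2.
  by rewrite Hnext // => /= e; apply: n0; rewrite e e2 vtx_mod.
have : (edge vs i0 `&` edge vs j) w by [].
by rewrite Hfar //; [move=> e; apply: ne|apply/eqP|apply/eqP].
Qed.

Lemma near_not_edge i r : ~ edge vs i r -> \forall r' \near r, ~ edge vs i r'.
Proof.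
move=> h.
have : ~ between (v i).1 r.1 (v i.+1).1 \/ ~ between (v i).2 r.2 (v i.+1).2.
  by apply: contrapT => /not_orP [/contrapT a /contrapT b]; apply: h; apply/edgeP.
case=> [/near_not_between_x|/near_not_between_y]; apply: filterS => r' H /edgeP [a b];
  exact: H.
Qed.

Lemma near_not_boundary r : ~ boundary vs r -> \forall r' \near r, ~ boundary vs r'.
Proof.
move=> h; have H i : (i < n)%N -> \forall r' \near r, ~ edge vs i r'.
  by move=> hi; apply: near_not_edge => e; apply: h; exists i.
by apply: filterS (near_forall_lt H) => r' H' [i hi e]; apply: (H' i hi).
Qed.

Lemma near_other_edges i0 w : (i0 < n)%N -> edge vs i0 w -> w <> v i0 -> w <> v i0.+1 ->
  \forall r' \near w, forall j, (j < n)%N -> j != i0 -> ~ edge vs j r'.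
Proof.
move=> hi ew n0 n1; apply: near_forall_lt => j hj.
have [->|nj] := eqVneq j i0; first by apply/nbhs_boxP; exists 1 => // r' _ _; rewrite eqxx.
apply: filterS (near_not_edge (not_edge_other hi hj (elimN eqP nj) ew n0 n1)) => r' h _.
exact: h.
Qed.

Definition xsum (F : nat -> bool) := \big[addb/false]_(0 <= i < n) F i.

Lemma eq_xsum (F G : nat -> bool) : (forall i, (i < n)%N -> F i = G i) -> xsum F = xsum G.
Proof. by move=> h; apply: eq_big_nat => i /andP [_ /h]. Qed.

Lemma xsum0 : xsum (fun _ => false) = false.
Proof. by rewrite /xsum big1. Qed.

Lemma xsum_split (F G : nat -> bool) : xsum (fun i => F i (+) G i) = xsum F (+) xsum G.
Proof. by rewrite /xsum big_split. Qed.

Lemma xsum_andl b (F : nat -> bool) : xsum (fun i => b && F i) = b && xsum F.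
Proof. by case: b => //; rewrite xsum0. Qed.

Lemma xsum_pred1 i0 : (i0 < n)%N -> xsum (fun i => i == i0) = true.
Proof.
move=> hi; rewrite /xsum (bigD1_seq i0) ?mem_index_iota ?hi ?iota_uniq //=.
by rewrite eqxx big1 // => i /negbTE.
Qed.

Lemma xsum_rot (F : nat -> bool) : F n = F 0 -> xsum (fun i => F i.+1) = xsum F.
Proof.
move=> e; rewrite /xsum -(prednK size_gt0).
by rewrite big_nat_recr //= big_nat_recl //= prednK ?size_gt0 // e addbC.
Qed.

Lemma xsum_vtx_telescope (f : pt R -> bool) : xsum (fun i => f (v i) (+) f (v i.+1)) = false.
Proof. by rewrite xsum_split (xsum_rot (F := fun i => f (v i))) ?addbb // vtx_size. Qed.

Lemma xsum_toggle i0 b1 b2 (F : nat -> bool) : (i0 < n)%N -> b1 (+) b2 ->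
  xsum (fun j => if j == i0 then b1 else F j) (+) xsum (fun j => if j == i0 then b2 else F j).
Proof.
move=> hi hb; rewrite -xsum_split; apply: etrans (xsum_pred1 hi); apply: eq_xsum => j _.
by case: (j == i0); [move: hb; case: b1; case: b2|rewrite addbb].
Qed.

(* The horizontal ray from [r] to the right crosses the vertical edge [i]; an
   edge is counted when exactly one endpoint lies at or below the ray, so that
   a ray through a vertex is counted consistently. *)
Definition crosses i r := vertical i && (r.1 < (v i).1) &&
  (((v i).2 <= r.2) (+) ((v i.+1).2 <= r.2)).
Definition parity r := xsum (fun i => crosses i r).

(* [crosses i] jumps when [r] moves down across the level of an endpoint. *)
Definition endpoint_level i r := vertical i && (r.1 < (v i).1) &&
  (((v i).2 == r.2) (+) ((v i.+1).2 == r.2)).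

Lemma near_crosses i r : \forall r' \near r, (r'.1 < (v i).1) = (r.1 < (v i).1) ->
  crosses i r' = crosses i r (+) ((r'.2 < r.2) && endpoint_level i r).
Proof.
apply: filterS (filterI (near_y_leE (v i).2 r) (near_y_leE (v i.+1).2 r)).
move=> r' [e1 e2] hx; rewrite /crosses /endpoint_level hx e1 e2.
case: (vertical i); case: (r.1 < _); case: (r'.2 < r.2);
  case: ((v i).2 <= r.2); case: ((v i.+1).2 <= r.2);
  case: ((v i).2 == r.2); case: ((v i.+1).2 == r.2); by [].
Qed.

Lemma crosses_not_between i r : vertical i -> ~ between (v i).2 r.2 (v i.+1).2 ->
  crosses i r = false.
Proof.
move=> vi /not_between [[a b]|[a b]]; rewrite /crosses vi.
- by rewrite !(leNgt _ r.2) a b andbF.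
- by rewrite (ltW a) (ltW b) andbF.
Qed.

Lemma xsum_endpoint_level r : (forall i, (i < n)%N -> ~~ vertical i -> ~ edge vs i r) ->
  xsum (fun i => endpoint_level i r) = false.
Proof.
move=> H; pose g (w : pt R) := (w.2 == r.2) && (r.1 < w.1).
rewrite -(xsum_vtx_telescope g); apply: eq_xsum => i hi; rewrite /endpoint_level /g.
case vi: (vertical i) => /=.
  by move/eqP: vi => ->; case: (r.1 < _); case: (_ == r.2); case: (_ == r.2).
have ey := horizontal_edge (negbT vi); rewrite -ey; case: eqP => //= ey2.
have := H i hi (negbT vi).
case: (ltP r.1 (v i).1) => h1; case: (ltP r.1 (v i.+1).1) => h2 //= hne;
  by case: hne; apply/edgeP; split; rewrite /between; [lra|rewrite -ey ey2; lra].
Qed.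

Lemma near_parity r : ~ boundary vs r -> \forall r' \near r, parity r' = parity r.
Proof.
move=> hb; have hb' i : (i < n)%N -> ~ edge vs i r by move=> hi e; apply: hb; exists i.
have H i : (i < n)%N -> \forall r' \near r,
    crosses i r' = crosses i r (+) ((r'.2 < r.2) && endpoint_level i r).
  move=> hi; have [ex|nx] := eqVneq (v i).1 r.1; last first.
    apply: filterS (filterI (near_crosses i r) (near_x_ltE nx)) => r' [h1 h2].
    exact: h1.
  have ce : crosses i r = false by rewrite /crosses ex ltxx andbF.
  have le : endpoint_level i r = false by rewrite /endpoint_level ex ltxx andbF.
  case vi: (vertical i); last first.
    by apply/nbhs_boxP; exists 1 => // r' _ _; rewrite ce le andbF /crosses vi.
  have nb : ~ between (v i).2 r.2 (v i.+1).2.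
    by move=> b; apply: (hb' i hi); apply/edgeP; split => //; move/eqP: vi => <-;
      rewrite ex; apply: between_left.
  apply: filterS (near_not_between_y nb) => r' nb' /=.
  by rewrite ce le andbF crosses_not_between.
apply: filterS (near_forall_lt H) => r' H'.
rewrite /parity (eq_xsum H') xsum_split xsum_andl xsum_endpoint_level ?andbF ?addbF //.
by move=> i hi _; apply: hb'.
Qed.

Lemma parity_bounds r : parity r ->
  [/\ exists2 i, (i < n)%N & (v i).1 <= r.1, exists2 i, (i < n)%N & r.1 < (v i).1,
      exists2 i, (i < n)%N & (v i).2 <= r.2 & exists2 i, (i < n)%N & r.2 < (v i).2].
Proof.
have vmod i : (i < n)%N -> ((i.+1 %% n)%N < n)%N by rewrite ltn_mod size_gt0.
move=> hp; split; apply: contrapT => /forall2NP H; move: hp; apply/negP; apply/negbT.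
- have H' i : (i < n)%N -> r.1 < (v i).1.
    by move=> hi; case: (H i) => // /negP; rewrite -ltNge.
  rewrite /parity -(xsum_vtx_telescope (fun w => w.2 <= r.2)); apply: eq_xsum => i hi.
  rewrite /crosses H' // andbT.
  by case vi: (vertical i) => //=; rewrite (horizontal_edge (negbT vi)) addbb.
- have H' i : (i < n)%N -> (r.1 < (v i).1) = false.
    by move=> hi; case: (H i) => // /negP /negbTE.
  by rewrite /parity -xsum0; apply: eq_xsum => i hi; rewrite /crosses H' // andbF.
- have H' i : (i < n)%N -> ((v i).2 <= r.2) = false.
    by move=> hi; case: (H i) => // /negP /negbTE.
  rewrite /parity -xsum0; apply: eq_xsum => i hi.
  by rewrite /crosses H' // -(vtx_mod i.+1) H' ?vmod // andbF.
- have H' i : (i < n)%N -> ((v i).2 <= r.2) = true.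
    by move=> hi; case: (H i) => // /negP; rewrite -leNgt.
  rewrite /parity -xsum0; apply: eq_xsum => i hi.
  by rewrite /crosses H' // -(vtx_mod i.+1) H' ?vmod // andbF.
Qed.

Definition vtx_bound := \sum_(0 <= i < n) (`|(v i).1| + `|(v i).2|).

Lemma vtx_le_bound i : (i < n)%N -> `|(v i).1| <= vtx_bound /\ `|(v i).2| <= vtx_bound.
Proof.
move=> hi; rewrite /vtx_bound (bigD1_seq i) /= ?mem_index_iota ?iota_uniq //.
have : 0 <= \sum_(j <- index_iota 0 n | j != i) (`|(v j).1| + `|(v j).2|).
  by apply: sumr_ge0 => j _; rewrite addr_ge0.
by have := normr_ge0 (v i).1; have := normr_ge0 (v i).2; lra.
Qed.

Lemma parity_bounded r : parity r -> `|r.1| <= vtx_bound /\ `|r.2| <= vtx_bound.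
Proof.
case/parity_bounds => [[i hi h1] [j hj h2] [k hk h3] [l hl h4]].
have [+ _] := vtx_le_bound hi; have [+ _] := vtx_le_bound hj.
have [_ +] := vtx_le_bound hk; have [_ +] := vtx_le_bound hl.
by rewrite !ler_norml => /andP [? ?] /andP [? ?] /andP [? ?] /andP [? ?]; split; lra.
Qed.

Lemma parity_connected (A : set (pt R)) a b : connected A -> A `<=` ~` boundary vs ->
  A a -> A b -> parity a = parity b.
Proof.
move=> cA AU Aa Ab.
pose P := [set r | ~ boundary vs r /\ parity r = parity a].
pose Q := [set r | ~ boundary vs r /\ parity r != parity a].
have near_same r : ~ boundary vs r -> \forall r' \near r,
    ~ boundary vs r' /\ parity r' = parity r.
  by move=> hr; apply: filterS (filterI (near_not_boundary hr) (near_parity hr)).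
have nP r : ~ boundary vs r -> parity r = parity a -> P° r.
  by move=> hr e; apply: filterS (near_same r hr) => r' [h1 h2]; split; rewrite ?h2.
have nQ r : ~ boundary vs r -> parity r != parity a -> Q° r.
  by move=> hr e; apply: filterS (near_same r hr) => r' [h1 h2]; split; rewrite ?h2.
(* [A `&` P°] is nonempty, open in [A], and closed in [A] since its
   complement in [A] is [A `&` Q°]. *)
have E : A `&` P° = A.
  apply: cA.
  - by exists a; split => //; apply: nP => //; apply: AU.
  - by exists P° => //; exact: open_interior.
  - exists (~` Q°); first exact/open_closedC/open_interior.
    apply/seteqP; split => r [Ar Hr]; split => //.
    + move=> /interior_subset [_]; move: Hr => /interior_subset [_ ->]; by rewrite eqxx.
    + have [e|ne] := eqVneq (parity r) (parity a); first exact: nP (AU r Ar) e.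
      by case: Hr; apply: nQ (AU r Ar) ne.
have : (A `&` P°) b by rewrite E.
by move=> [_ /interior_subset [_ ->]].
Qed.

Lemma odd_parity_interior r : ~ boundary vs r -> parity r -> (region vs)° r.
Proof.
move=> hr pr; apply: filterS (filterI (near_not_boundary hr) (near_parity hr)).
move=> r' [h1 h2]; right; split => //; exists vtx_bound => q hq.
apply: parity_bounded.
rewrite -(@parity_connected (connected_component (~` boundary vs) r') r' q) ?h2 //.
- exact: component_connected.
- exact: connected_component_sub.
- exact: connected_component_refl.
Qed.

Lemma not_region_of_unbounded (A : set (pt R)) r : connected A ->
  A `<=` ~` boundary vs -> A r ->
  (forall M, exists2 z, A z & M < `|z.1| \/ M < `|z.2|) -> ~ region vs r.
Proof.
move=> cA AU Ar unb [hb|[_ [M HM]]]; first exact: AU r Ar hb.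
have [z Az Mz] := unb M.
by have := HM z (connected_component_max Ar AU cA Az); lra.
Qed.

Lemma far_not_boundary z : vtx_bound < `|z.1| \/ vtx_bound < `|z.2| -> ~ boundary vs z.
Proof.
have B i : `|(v i).1| <= vtx_bound /\ `|(v i).2| <= vtx_bound.
  by apply: (vtx_all (P := fun p => `|p.1| <= _ /\ `|p.2| <= _)) => j /vtx_le_bound.
move=> hz [i _ /edgeP [h1 h2]]; have [b1 b2] := B i; have [b3 b4] := B i.+1.
by move: h1 h2 b1 b2 b3 b4 hz; rewrite /between !ler_norml !ltr_normr; lra.
Qed.

Lemma not_region_hray w (J : set R) : is_interval J -> J w.1 ->
  (forall t, J t -> `|w.1| <= `|t|) -> (forall M, exists2 t, J t & M < `|t|) ->
  vtx_bound < `|w.1| -> ~ region vs w.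
Proof.
move=> iJ Jw Jfar Junb wfar.
apply: (@not_region_of_unbounded [set z | J z.1 /\ z.2 = w.2]).
- exact: hline_connected.
- by move=> z [/Jfar hz _]; apply: far_not_boundary; left; lra.
- by [].
- by move=> M; have [t Jt Mt] := Junb M; exists (t, w.2); [split|left].
Qed.

Lemma not_region_vray w (J : set R) : is_interval J -> J w.2 ->
  (forall t, J t -> `|w.2| <= `|t|) -> (forall M, exists2 t, J t & M < `|t|) ->
  vtx_bound < `|w.2| -> ~ region vs w.
Proof.
move=> iJ Jw Jfar Junb wfar.
apply: (@not_region_of_unbounded [set z | z.1 = w.1 /\ J z.2]).
- exact: vline_connected.
- by move=> z [_ /Jfar hz]; apply: far_not_boundary; right; lra.
- by [].
- by move=> M; have [t Jt Mt] := Junb M; exists (w.1, t); [split|right].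
Qed.

Lemma region_bounded w : region vs w -> `|w.1| <= vtx_bound /\ `|w.2| <= vtx_bound.
Proof.
move=> rw; split; rewrite leNgt; apply/negP => far.
- have [w0|w0] := ltP 0 w.1.
  + apply: (not_region_hray (@is_interval_ge _ w.1) _ _ (@unbounded_ge _ w.1) far rw) => /=.
      exact: lexx.
    by move=> t ht; rewrite !gtr0_norm //; lra.
  + apply: (not_region_hray (@is_interval_le _ w.1) _ _ (@unbounded_le _ w.1) far rw) => /=.
      exact: lexx.
    by move=> t ht; rewrite !ler0_norm //; lra.
- have [w0|w0] := ltP 0 w.2.
  + apply: (not_region_vray (@is_interval_ge _ w.2) _ _ (@unbounded_ge _ w.2) far rw) => /=.
      exact: lexx.
    by move=> t ht; rewrite !gtr0_norm //; lra.
  + apply: (not_region_vray (@is_interval_le _ w.2) _ _ (@unbounded_le _ w.2) far rw) => /=.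
      exact: lexx.
    by move=> t ht; rewrite !ler0_norm //; lra.
Qed.

Lemma region_interior_off_boundary w : region vs w -> ~ boundary vs w -> (region vs)° w.
Proof.
move=> [hb|[_ bnd]] nb; first by [].
have /nbhs_boxP [d d0 Hd] := near_not_boundary nb.
apply/nbhs_boxP; exists d => // r' h1 h2.
have near_between a t b : between a t b -> `|b - a| < d -> `|t - a| < d.
  by rewrite /between !ltr_norml => h /andP [? ?]; apply/andP; lra.
have between_interval a b : is_interval [set t : R | between a t b].
  by move=> x y /= hx hy z /andP [? ?]; move: hx hy; rewrite /between; lra.
pose m := (r'.1, w.2).
have c1 : connected_component (~` boundary vs) w m.
  apply: (connected_component_max (B := [set z | between w.1 z.1 r'.1 /\ z.2 = w.2])).
  - by split; [apply: between_left|].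
  - by move=> z [hz1 hz2]; apply: Hd; [apply: near_between hz1 h1|rewrite hz2 subrr normr0].
  - exact: (hline_connected (J := [set t | between w.1 t r'.1])).
  - by split; [apply: between_right|].
have c2 : connected_component (~` boundary vs) m r'.
  apply: (connected_component_max (B := [set z | z.1 = r'.1 /\ between w.2 z.2 r'.2])).
  - by split; [|apply: between_left].
  - by move=> z [hz1 hz2]; apply: Hd; [rewrite hz1|apply: near_between hz2 h2].
  - exact: (vline_connected (J := [set t | between w.2 t r'.2])).
  - by split; [|apply: between_right].
have c3 := connected_component_trans c1 c2.
right; split; first exact: (connected_component_sub c3).
by rewrite -(same_connected_component c3).
Qed.

Lemma odd_parity_of_flip w e d0 (f g : R -> pt R) : 0 < e -> 0 < d0 ->
  (forall d, 0 < d -> d < d0 ->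
     [/\ ~ boundary vs (f d), ~ boundary vs (g d) & parity (f d) (+) parity (g d)]) ->
  (forall d, 0 < d -> [/\ `|(f d).1 - w.1| <= d, `|(f d).2 - w.2| <= d,
                         `|(g d).1 - w.1| <= d & `|(g d).2 - w.2| <= d]) ->
  exists r, [/\ ~ boundary vs r, parity r, `|r.1 - w.1| < e & `|r.2 - w.2| < e].
Proof.
move=> e0 d00 flip dist; pose d := Num.min e d0 / 2.
have [d0' de dd0] : [/\ 0 < d, d < e & d < d0].
  have : 0 < Num.min e d0 by rewrite lt_min e0.
  have : Num.min e d0 <= e /\ Num.min e d0 <= d0 by split; rewrite ge_min lexx ?orbT.
  by rewrite /d; split; lra.
have [nf ng fg] := flip d d0' dd0; have [f1 f2 g1 g2] := dist d d0'.
case pf: (parity (f d)); first by exists (f d); split => //; lra.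
by exists (g d); split => //; [move: fg; rewrite pf|lra|lra].
Qed.

Lemma near_crosses_vertical_edge i0 w : (i0 < n)%N -> vertical i0 -> edge vs i0 w ->
  w <> v i0 -> w <> v i0.+1 ->
  \forall r' \near w, forall j, (j < n)%N -> r'.2 = w.2 ->
    crosses j r' = if j == i0 then r'.1 < w.1 else crosses j w.
Proof.
move=> hi vi ew n0 n1; have vx : (v i0).1 = (v i0.+1).1 by apply/eqP.
have wx : w.1 = (v i0).1 by move: (edge_x ew); rewrite /between vx; lra.
apply: near_forall_lt => j hj; have [->|nj] := eqVneq j i0.
  apply/nbhs_boxP; exists 1 => // r' _ _ r'y; rewrite /crosses vi r'y -wx /=.
  have ny0 : (v i0).2 != w.2.
    by apply/eqP => h; apply: n0; rewrite (surjective_pairing w) wx -h -surjective_pairing.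
  have ny1 : (v i0.+1).2 != w.2.
    by apply/eqP => h; apply: n1; rewrite (surjective_pairing w) wx vx -h -surjective_pairing.
  by rewrite (between_le_xor (edge_y ew) ny0 ny1) andbT.
have wj := not_edge_other hi hj (elimN eqP nj) ew n0 n1.
have [exj|nxj] := eqVneq (v j).1 w.1; last first.
  by apply: filterS (near_x_ltE nxj) => r' hx r'y; rewrite /crosses hx r'y.
apply/nbhs_boxP; exists 1 => // r' _ _ r'y.
rewrite /crosses exj ltxx andbF; case vj: (vertical j) => //=.
have nb : ~ between (v j).2 r'.2 (v j.+1).2.
  move=> b; apply: wj; apply/edgeP; split; last by rewrite -r'y.
  by move/eqP: vj => <-; rewrite exj; apply: between_left.
by have := crosses_not_between vj nb; rewrite /crosses vj exj.
Qed.

Lemma parity_flip_vertical_edge i0 w : (i0 < n)%N -> vertical i0 -> edge vs i0 w ->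
  w <> v i0 -> w <> v i0.+1 ->
  exists2 d0, 0 < d0 & forall d, 0 < d -> d < d0 ->
    [/\ ~ boundary vs (w.1 - d, w.2), ~ boundary vs (w.1 + d, w.2)
      & parity (w.1 - d, w.2) (+) parity (w.1 + d, w.2)].
Proof.
move=> hi vi ew n0 n1; have vx : (v i0).1 = (v i0.+1).1 by apply/eqP.
have wx : w.1 = (v i0).1 by move: (edge_x ew); rewrite /between vx; lra.
have [d0 d00 Hd] := nbhs_box_and (near_other_edges hi ew n0 n1)
  (near_crosses_vertical_edge hi vi ew n0 n1).
exists d0 => // d d0' dd0.
have inbox t : `|t| = d -> [/\ ~ boundary vs (w.1 + t, w.2) &
    parity (w.1 + t, w.2) = xsum (fun j => if j == i0 then t < 0 else crosses j w)].
  move=> td; have [oth cr] : _ /\ _ := Hd (w.1 + t, w.2)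
    ltac:(by rewrite /= addrAC subrr add0r td) ltac:(by rewrite /= subrr normr0).
  split.
  - move=> [j hj ej]; have [eji|nji] := eqVneq j i0; last exact: oth j hj nji ej.
    move: ej; rewrite eji => /edge_x; rewrite /between /= -vx -wx.
    move: td; have := normr_ge0 t.
    by case: (ltrP t 0) => ht; [rewrite ltr0_norm|rewrite ger0_norm]; lra.
  - apply: eq_xsum => j hj; rewrite cr //.
    by case: (j == i0) => //=; apply/idP/idP; lra.
have [nbm pm] := inbox (- d) ltac:(by rewrite normrN gtr0_norm).
have [nbp pp] := inbox d ltac:(by rewrite gtr0_norm).
rewrite -[w.1 - d]/(w.1 + - d); split => //; rewrite pm pp.
by apply: xsum_toggle => //; rewrite oppr_lt0 d0' ltNge ltW.
Qed.

Lemma xsum_endpoint_level_odd i0 w : (i0 < n)%N -> ~~ vertical i0 -> edge vs i0 w ->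
  w <> v i0 -> w <> v i0.+1 -> xsum (fun j => endpoint_level j w).
Proof.
move=> hi vi ew n0 n1; have vy := horizontal_edge vi.
have wy : w.2 = (v i0).2 by move: (edge_y ew); rewrite /between vy; lra.
pose g (z : pt R) := (z.2 == w.2) && (w.1 < z.1).
pose H j := ~~ vertical j && (g (v j) (+) g (v j.+1)).
have E : xsum (fun j => endpoint_level j w) = xsum H.
  have := xsum_vtx_telescope g; rewrite -(@eq_xsum (fun j => endpoint_level j w (+) H j)).
    by rewrite xsum_split; case: (xsum _); case: (xsum _).
  move=> j hj; rewrite /H /endpoint_level /g; case vj: (vertical j) => //=.
  by move/eqP: vj => ->; case: (w.1 < _); case: (_ == w.2); case: (_ == w.2).
rewrite E; apply: etrans (xsum_pred1 hi); apply: eq_xsum => j hj.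
have [->|nj] := eqVneq j i0.
  have nx0 : (v i0).1 != w.1.
    by apply/eqP => h; apply: n0; rewrite (surjective_pairing w) wy -h -surjective_pairing.
  have nx1 : (v i0.+1).1 != w.1.
    by apply/eqP => h; apply: n1; rewrite (surjective_pairing w) wy vy -h -surjective_pairing.
  by rewrite /H vi /g -vy -wy eqxx (between_lt_xor (edge_x ew) nx0 nx1).
rewrite /H; case vj: (vertical j) => //=.
have vyj := horizontal_edge (negbT vj); rewrite /g -vyj; case: eqP => //= eyj.
have ne := not_edge_other hi hj (elimN eqP nj) ew n0 n1.
case: (ltP w.1 (v j).1) => h1; case: (ltP w.1 (v j.+1).1) => h2 //=;
  by case: ne; apply/edgeP; split; rewrite /between; [lra|rewrite -vyj eyj; lra].
Qed.

Lemma parity_flip_horizontal_edge i0 w : (i0 < n)%N -> ~~ vertical i0 -> edge vs i0 w ->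
  w <> v i0 -> w <> v i0.+1 ->
  exists2 d0, 0 < d0 & forall d, 0 < d -> d < d0 ->
    [/\ ~ boundary vs (w.1, w.2 - d), ~ boundary vs (w.1, w.2 + d)
      & parity (w.1, w.2 - d) (+) parity (w.1, w.2 + d)].
Proof.
move=> hi vi ew n0 n1; have vy := horizontal_edge vi.
have wy : w.2 = (v i0).2 by move: (edge_y ew); rewrite /between vy; lra.
have Hc : \forall r' \near w, forall j, (j < n)%N ->
    (r'.1 < (v j).1) = (w.1 < (v j).1) ->
    crosses j r' = crosses j w (+) ((r'.2 < w.2) && endpoint_level j w).
  by apply: near_forall_lt => j _; apply: near_crosses.
have [d0 d00 Hd] := nbhs_box_and (near_other_edges hi ew n0 n1) Hc.
exists d0 => // d d0' dd0.
have inbox t : `|t| = d -> [/\ ~ boundary vs (w.1, w.2 + t) &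
    parity (w.1, w.2 + t) = parity w (+) (t < 0) && xsum (fun j => endpoint_level j w)].
  move=> td; have [oth cr] := Hd (w.1, w.2 + t)
    ltac:(by rewrite /= subrr normr0) ltac:(by rewrite /= addrAC subrr add0r td).
  split.
  - move=> [j hj ej]; have [eji|nji] := eqVneq j i0; last exact: oth j hj nji ej.
    move: ej; rewrite eji => /edge_y; rewrite /between /= -vy -wy.
    move: td; have := normr_ge0 t.
    by case: (ltrP t 0) => ht; [rewrite ltr0_norm|rewrite ger0_norm]; lra.
  - rewrite /parity -xsum_andl -xsum_split; apply: eq_xsum => j hj; rewrite cr //=.
    by congr (_ (+) (_ && _)); apply/idP/idP; lra.
have [nbm pm] := inbox (- d) ltac:(by rewrite normrN gtr0_norm).
have [nbp pp] := inbox d ltac:(by rewrite gtr0_norm).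
rewrite -[w.2 - d]/(w.2 + - d); split => //; rewrite pm pp.
rewrite oppr_lt0 d0' ltNge (ltW d0') /= (xsum_endpoint_level_odd hi vi ew n0 n1).
by case: (parity w).
Qed.

Lemma region_interior_dense w e : region vs w -> 0 < e ->
  exists z, (region vs)° z /\ `|z.1 - w.1| < e /\ `|z.2 - w.2| < e.
Proof.
move=> rw e0; have [hb|nb] := pselect (boundary vs w); last first.
  by exists w; split; [exact: region_interior_off_boundary|rewrite !subrr normr0].
case: hb => i0 hi ew; have e2 : 0 < e / 2 by rewrite divr_gt0.
have [w' [ew' n0 n1 d1 d2]] := seg_inner_near (@vtx_neq_succ i0) ew e2.
have shift (x t : R) : 0 < t -> `|x - t - x| <= t /\ `|x + t - x| <= t.
  by move=> t0; rewrite addrAC subrr add0r normrN gtr0_norm // addrAC subrr add0r gtr0_norm.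
have [r [nbr pr r1 r2]] : exists r, [/\ ~ boundary vs r, parity r,
    `|r.1 - w'.1| < e / 2 & `|r.2 - w'.2| < e / 2].
  case vi: (vertical i0).
  - have [d0 d00 flip] := parity_flip_vertical_edge hi vi ew' n0 n1.
    apply: (odd_parity_of_flip e2 d00 flip) => d d0'.
    by have [h1 h2] := shift w'.1 d d0'; rewrite /= subrr normr0 (ltW d0').
  - have [d0 d00 flip] := parity_flip_horizontal_edge hi (negbT vi) ew' n0 n1.
    apply: (odd_parity_of_flip e2 d00 flip) => d d0'.
    by have [h1 h2] := shift w'.2 d d0'; rewrite /= subrr normr0 (ltW d0').
exists r; split; first exact: odd_parity_interior.
have := ler_distD w'.1 r.1 w.1; have := ler_distD w'.2 r.2 w.2; lra.
Qed.

End Polygon.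

Section RectConvex.
Variable R : realType.
Variable om : set (pt R).
Implicit Types (p q z : pt R) (t : R).

Lemma interior_in_rect a b c d z : om `<=` rect a b c d -> om° z ->
  a < z.1 < b /\ c < z.2 < d.
Proof.
move=> Hbox /nbhs_boxP [e e0 H]; have e2 : 0 < e / 2 by rewrite divr_gt0.
have n2 : `|e / 2| < e by rewrite gtr0_norm //; lra.
have n2' : `|- (e / 2)| < e by rewrite normrN.
have z0 (x : R) : `|x - x| < e by rewrite subrr normr0.
have shift (x : R) s : `|s| < e -> `|x + s - x| < e by rewrite addrAC subrr add0r.
have [/andP [a1 _] _] := Hbox _ (H (z.1 + - (e / 2), z.2) (shift _ _ n2') (z0 _)).
have [/andP [_ b2] _] := Hbox _ (H (z.1 + e / 2, z.2) (shift _ _ n2) (z0 _)).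
have [_ /andP [c1 _]] := Hbox _ (H (z.1, z.2 + - (e / 2)) (z0 _) (shift _ _ n2')).
have [_ /andP [_ d2]] := Hbox _ (H (z.1, z.2 + e / 2) (z0 _) (shift _ _ n2)).
by move: a1 b2 c1 d2 => /= *; split; apply/andP; split; lra.
Qed.

Hypothesis Hconv : rect_convex om.

Lemma rect_convex_hseg p q t : om p -> om q -> p.2 = q.2 -> between p.1 t q.1 ->
  om (t, p.2).
Proof.
move=> hp hq e hb; have [s [sh tr]] := Hconv hp hq.
by apply: tr; apply: (shortest_hor_trace sh e).
Qed.

Lemma rect_convex_vseg p q t : om p -> om q -> p.1 = q.1 -> between p.2 t q.2 ->
  om (p.1, t).
Proof.
move=> hp hq e hb; have [s [sh tr]] := Hconv hp hq.
by apply: tr; apply: (shortest_ver_trace sh e).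
Qed.

End RectConvex.

Section Diagonal.
Variable R : realType.
Variable om : set (pt R).
Hypothesis Hconv : rect_convex om.
Variables a b c d y0 y1 : R.
Hypothesis hab : a < b.
Hypothesis hcd : c < d.
Hypothesis hy : (y0 = c /\ y1 = d) \/ (y0 = d /\ y1 = c).
Hypothesis Hbox : om `<=` rect a b c d.
Local Notation diag := (seg (a, y0) (b, y1)).
Hypothesis Hdiag : diag `<=` om.
Local Notation I := (om°).
Implicit Types (p q w z : pt R) (X Y : R).

Definition dxdy := (b - a) / (y1 - y0).
Definition dydx := (y1 - y0) / (b - a).
Definition diag_x Y := a + (Y - y0) * dxdy.
Definition diag_y X := y0 + (X - a) * dydx.

Lemma diag_dy_neq0 : y1 - y0 != 0.
Proof.
by rewrite subr_eq0; case: hy => [[-> ->]|[-> ->]]; [rewrite (gt_eqF hcd)|rewrite (lt_eqF hcd)].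
Qed.

Lemma diag_dx_neq0 : b - a != 0.
Proof. by rewrite subr_eq0 gt_eqF. Qed.

Lemma dxdyK : dxdy * dydx = 1.
Proof.
rewrite /dxdy /dydx; have := diag_dy_neq0; have := diag_dx_neq0 => h1 h2.
by field; apply/andP.
Qed.

Lemma diag_x_shift Y Y' : diag_x Y' = diag_x Y + (Y' - Y) * dxdy.
Proof. by rewrite /diag_x; ring. Qed.

Lemma diag_y_shift X X' : diag_y X' = diag_y X + (X' - X) * dydx.
Proof. by rewrite /diag_y; ring. Qed.

Lemma diag_x_y X Y : (diag_x Y - X) * dydx = Y - diag_y X.
Proof.
rewrite /diag_x /diag_y /dxdy /dydx; have := diag_dy_neq0; have := diag_dx_neq0 => h1 h2.
by field; apply/andP.
Qed.

Lemma diag_at_height Y : c <= Y <= d -> diag (diag_x Y, Y).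
Proof.
move=> /andP [h1 h2]; exists ((Y - y0) / (y1 - y0)); have n0 := diag_dy_neq0.
split; last by rewrite /diag_x /dxdy; congr pair; rewrite /=; field.
case: hy => [[e0 e1]|[e0 e1]]; rewrite e0 e1 in n0 *.
- rewrite divr_ge0 /=; [|lra|lra].
  by rewrite ler_pdivrMr ?mul1r; lra.
- rewrite -(mulrNN (Y - d)) -invrN divr_ge0 /=; [|lra|lra].
  by rewrite ler_pdivrMr ?mul1r; lra.
Qed.

Lemma diag_at_abscissa X : a <= X <= b -> diag (X, diag_y X).
Proof.
move=> /andP [h1 h2]; exists ((X - a) / (b - a)); have n0 := diag_dx_neq0.
split; last by rewrite /diag_y /dydx; congr pair; rewrite /=; field.
by rewrite divr_ge0 /=; [rewrite ler_pdivrMr ?mul1r; lra|lra|lra].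
Qed.

Lemma hchord_interior z q : I z -> q.2 = z.2 ->
  (z.1 < q.1 < diag_x z.2) \/ (diag_x z.2 < q.1 < z.1) -> I q.
Proof.
move=> /nbhs_boxP [e0 e00 H] qy hq; set Y := z.2 in hq qy *.
have gz : 0 < `|q.1 - z.1|.
  by rewrite normr_gt0 subr_eq0; apply/eqP; case: hq => /andP [h1 h2]; lra.
have gh : 0 < `|diag_x Y - q.1| / (1 + `|dxdy|).
  rewrite divr_gt0 ?normr_gt0 ?subr_eq0; last 2 first; [|by have := normr_ge0 dxdy; lra|by []].
  by apply/eqP; case: hq => /andP [h1 h2]; lra.
have [dl0 dle dlz dlh] := min3_pos e00 gz gh; set dl := Num.min _ _ in dl0 dle dlz dlh.
have dlh' : dl + dl * `|dxdy| <= `|diag_x Y - q.1|.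
  by move: dlh; rewrite ler_pdivlMr ?mulrDr ?mulr1 //; have := normr_ge0 dxdy; lra.
apply/nbhs_boxP; exists dl => // r h1; rewrite qy => h2.
have zr : om (z.1, r.2) by apply: H; rewrite ?subrr ?normr0 //; apply: lt_le_trans h2 dle.
have [_ Yr] := Hbox zr.
have Dr : om (diag_x r.2, r.2) by apply/Hdiag/diag_at_height.
have hl := diag_x_shift Y r.2.
have kb : `|(r.2 - Y) * dxdy| <= dl * `|dxdy| by rewrite normrM ler_wpM2r // ltW.
move: kb h1 dlz dlh'; rewrite !ler_norml ltr_norml => /andP [k1 k2] /andP [r1 r2] dlz dlh'.
rewrite (surjective_pairing r); apply: (rect_convex_hseg Hconv zr Dr erefl) => /=.
case: hq => /andP [q1 q2].
- rewrite ger0_norm in dlz; last lra.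
  rewrite (ger0_norm (x := diag_x Y - q.1)) in dlh'; last lra.
  by left; apply/andP; split; lra.
- rewrite ler0_norm in dlz; last lra.
  rewrite (ler0_norm (x := diag_x Y - q.1)) in dlh'; last lra.
  by right; apply/andP; split; lra.
Qed.

Lemma vchord_interior z q : I z -> q.1 = z.1 ->
  (z.2 < q.2 < diag_y z.1) \/ (diag_y z.1 < q.2 < z.2) -> I q.
Proof.
move=> /nbhs_boxP [e0 e00 H] qx hq; set X := z.1 in hq qx *.
have gz : 0 < `|q.2 - z.2|.
  by rewrite normr_gt0 subr_eq0; apply/eqP; case: hq => /andP [h1 h2]; lra.
have gh : 0 < `|diag_y X - q.2| / (1 + `|dydx|).
  rewrite divr_gt0 ?normr_gt0 ?subr_eq0; last 2 first; [|by have := normr_ge0 dydx; lra|by []].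
  by apply/eqP; case: hq => /andP [h1 h2]; lra.
have [dl0 dle dlz dlh] := min3_pos e00 gz gh; set dl := Num.min _ _ in dl0 dle dlz dlh.
have dlh' : dl + dl * `|dydx| <= `|diag_y X - q.2|.
  by move: dlh; rewrite ler_pdivlMr ?mulrDr ?mulr1 //; have := normr_ge0 dydx; lra.
apply/nbhs_boxP; exists dl => // r; rewrite qx => h1 h2.
have zr : om (r.1, z.2) by apply: H; rewrite ?subrr ?normr0 //; apply: lt_le_trans h1 dle.
have [Xr _] := Hbox zr.
have Dr : om (r.1, diag_y r.1) by apply/Hdiag/diag_at_abscissa.
have hl := diag_y_shift X r.1.
have kb : `|(r.1 - X) * dydx| <= dl * `|dydx| by rewrite normrM ler_wpM2r // ltW.
move: kb h2 dlz dlh'; rewrite !ler_norml ltr_norml => /andP [k1 k2] /andP [r1 r2] dlz dlh'.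
rewrite (surjective_pairing r); apply: (rect_convex_vseg Hconv zr Dr erefl) => /=.
case: hq => /andP [q1 q2].
- rewrite ger0_norm in dlz; last lra.
  rewrite (ger0_norm (x := diag_y X - q.2)) in dlh'; last lra.
  by left; apply/andP; split; lra.
- rewrite ler0_norm in dlz; last lra.
  rewrite (ler0_norm (x := diag_y X - q.2)) in dlh'; last lra.
  by right; apply/andP; split; lra.
Qed.

Lemma hchord_end_interior x1 x2 z : I z -> between x1 z.1 x2 ->
  ~ between x1 (diag_x z.2) x2 ->
  (I (x1, z.2) /\ between x2 x1 (diag_x z.2)) \/ (I (x2, z.2) /\ between x1 x2 (diag_x z.2)).
Proof.
move=> Iz bz /not_between hn.
have Ie x : between z.1 x (diag_x z.2) -> x != diag_x z.2 -> I (x, z.2).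
  move=> hx nx; have [->|nex] := eqVneq x z.1; first by rewrite -surjective_pairing.
  apply: (hchord_interior Iz) => //=.
  move: hx nx nex; rewrite /between => [[/andP [u1 u2]|/andP [u1 u2]]] nx nex.
  - by left; apply/andP; split; rewrite lt_neqAle ?u1 ?u2 ?andbT // eq_sym.
  - by right; apply/andP; split; rewrite lt_neqAle ?u1 ?u2 ?andbT // eq_sym.
have ne x : x < diag_x z.2 \/ diag_x z.2 < x -> x != diag_x z.2.
  by move=> [h|h]; apply/eqP => e; move: h; rewrite e ltxx.
move: bz; rewrite /between => bz.
have [x12|x12] := lerP x1 x2; case: hn => [[h1 h2]|[h1 h2]].
- by left; split; [apply: Ie; [rewrite /between; lra|apply: ne; lra]|rewrite /between; lra].
- by right; split; [apply: Ie; [rewrite /between; lra|apply: ne; lra]|rewrite /between; lra].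
- by right; split; [apply: Ie; [rewrite /between; lra|apply: ne; lra]|rewrite /between; lra].
- by left; split; [apply: Ie; [rewrite /between; lra|apply: ne; lra]|rewrite /between; lra].
Qed.

Lemma vchord_end_interior u1 u2 z : I z -> between u1 z.2 u2 ->
  ~ between u1 (diag_y z.1) u2 ->
  (I (z.1, u1) /\ between u2 u1 (diag_y z.1)) \/ (I (z.1, u2) /\ between u1 u2 (diag_y z.1)).
Proof.
move=> Iz bz /not_between hn.
have Ie y : between z.2 y (diag_y z.1) -> y != diag_y z.1 -> I (z.1, y).
  move=> by' ny; have [->|ney] := eqVneq y z.2; first by rewrite -surjective_pairing.
  apply: (vchord_interior Iz) => //=.
  move: by' ny ney; rewrite /between => [[/andP [w1 w2]|/andP [w1 w2]]] ny ney.
  - by left; apply/andP; split; rewrite lt_neqAle ?w1 ?w2 ?andbT // eq_sym.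
  - by right; apply/andP; split; rewrite lt_neqAle ?w1 ?w2 ?andbT // eq_sym.
have ne y : y < diag_y z.1 \/ diag_y z.1 < y -> y != diag_y z.1.
  by move=> [h|h]; apply/eqP => e; move: h; rewrite e ltxx.
move: bz; rewrite /between => bz.
have [u12|u12] := lerP u1 u2; case: hn => [[h1 h2]|[h1 h2]].
- by left; split; [apply: Ie; [rewrite /between; lra|apply: ne; lra]|rewrite /between; lra].
- by right; split; [apply: Ie; [rewrite /between; lra|apply: ne; lra]|rewrite /between; lra].
- by right; split; [apply: Ie; [rewrite /between; lra|apply: ne; lra]|rewrite /between; lra].
- by left; split; [apply: Ie; [rewrite /between; lra|apply: ne; lra]|rewrite /between; lra].
Qed.

Lemma hsegment_meets_diag p q z : ~ I p -> ~ I q -> p.2 = q.2 -> I z -> z.2 = p.2 ->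
  between p.1 z.1 q.1 -> between p.1 (diag_x p.2) q.1.
Proof.
move=> np nq e Iz zy bz; apply: contrapT; rewrite -zy => nb.
case: (hchord_end_interior Iz bz nb) => [[h _]|[h _]].
- by apply: np; rewrite (surjective_pairing p) -zy.
- by apply: nq; rewrite (surjective_pairing q) -e -zy.
Qed.

Lemma vsegment_meets_diag p q z : ~ I p -> ~ I q -> p.1 = q.1 -> I z -> z.1 = p.1 ->
  between p.2 z.2 q.2 -> between p.2 (diag_y p.1) q.2.
Proof.
move=> np nq e Iz zx bz; apply: contrapT; rewrite -zx => nb.
case: (vchord_end_interior Iz bz nb) => [[h _]|[h _]].
- by apply: np; rewrite (surjective_pairing p) -zx.
- by apply: nq; rewrite (surjective_pairing q) -e -zx.
Qed.

Lemma hv_corner_interior p q z : ~ I p -> ~ I q ->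
  ~ (exists w, elbow_hv p q w /\ diag w) -> elbow_hv p q z -> I z ->
  [/\ I (q.1, p.2), between p.1 q.1 (diag_x p.2) & between q.2 p.2 (diag_y q.1)].
Proof.
move=> np nq nD Lz Iz.
have nH w : I w -> w.2 = p.2 -> ~ between p.1 (diag_x p.2) q.1.
  move=> Iw wy hb; have [_ /andP [c1 c2]] := interior_in_rect Hbox Iw.
  apply: nD; exists (diag_x p.2, p.2); split; first by left.
  by apply: diag_at_height; apply/andP; rewrite -wy; split; apply: ltW.
have nV w : I w -> w.1 = q.1 -> ~ between p.2 (diag_y q.1) q.2.
  move=> Iw wx hb; have [/andP [c1 c2] _] := interior_in_rect Hbox Iw.
  apply: nD; exists (q.1, diag_y q.1); split; first by right.
  by apply: diag_at_abscissa; apply/andP; rewrite -wx; split; apply: ltW.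
case: Lz => [[bz zy]|[zx bz]].
- have := hchord_end_interior Iz bz; rewrite zy => /(_ (nH z Iz zy)) [[h _]|[h hc]].
    by case: np; rewrite (surjective_pairing p).
  have := @vchord_end_interior p.2 q.2 (q.1, p.2) h (between_left _ _) (nV _ h erefl).
  by case=> [[]|[h' _]] //; case: nq; rewrite (surjective_pairing q).
- have := vchord_end_interior Iz bz; rewrite zx => /(_ (nV z Iz zx)) [[h vc]|[h _]]; last first.
    by case: nq; rewrite (surjective_pairing q).
  have := @hchord_end_interior p.1 q.1 (q.1, p.2) h (between_right _ _) (nH _ h erefl).
  by case=> [[h' _]|[]] //; case: np; rewrite (surjective_pairing p).
Qed.

Lemma hv_corner_sides p q : p.1 != q.1 -> p.2 != q.2 ->
  diag_x p.2 != q.1 -> diag_y q.1 != p.2 ->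
  between p.1 q.1 (diag_x p.2) -> between q.2 p.2 (diag_y q.1) ->
  ((q.2 < p.2 < diag_y p.1) \/ (diag_y p.1 < p.2 < q.2)) /\
  ((p.1 < q.1 < diag_x q.2) \/ (diag_x q.2 < q.1 < p.1)).
Proof.
move=> n1 n2 sH sV.
have HG := diag_x_y q.1 p.2; have GL := diag_y_shift q.1 p.1.
have HL := diag_x_shift p.2 q.2; have KK := dxdyK.
rewrite /between; case=> /andP [h1 h2]; case=> /andP [h3 h4].
- have l1 : p.1 < q.1 by rewrite lt_neqAle n1 h1.
  have l2 : q.1 < diag_x p.2 by rewrite lt_neqAle eq_sym sH h2.
  have l3 : q.2 < p.2 by rewrite lt_neqAle eq_sym n2 h3.
  have l4 : p.2 < diag_y q.1 by rewrite lt_neqAle eq_sym sV h4.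
  have k0 : dydx < 0 by nra.
  have k1 : dxdy < 0 by nra.
  by split; left; apply/andP; split => //; nra.
- have l1 : p.1 < q.1 by rewrite lt_neqAle n1 h1.
  have l2 : q.1 < diag_x p.2 by rewrite lt_neqAle eq_sym sH h2.
  have l3 : p.2 < q.2 by rewrite lt_neqAle n2 h4.
  have l4 : diag_y q.1 < p.2 by rewrite lt_neqAle sV h3.
  have k0 : 0 < dydx by nra.
  have k1 : 0 < dxdy by nra.
  by split; [right|left]; apply/andP; split => //; nra.
- have l1 : q.1 < p.1 by rewrite lt_neqAle eq_sym n1 h2.
  have l2 : diag_x p.2 < q.1 by rewrite lt_neqAle sH h1.
  have l3 : q.2 < p.2 by rewrite lt_neqAle eq_sym n2 h3.
  have l4 : p.2 < diag_y q.1 by rewrite lt_neqAle eq_sym sV h4.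
  have k0 : 0 < dydx by nra.
  have k1 : 0 < dxdy by nra.
  by split; [left|right]; apply/andP; split => //; nra.
- have l1 : q.1 < p.1 by rewrite lt_neqAle eq_sym n1 h2.
  have l2 : diag_x p.2 < q.1 by rewrite lt_neqAle sH h1.
  have l3 : p.2 < q.2 by rewrite lt_neqAle n2 h4.
  have l4 : diag_y q.1 < p.2 by rewrite lt_neqAle sV h3.
  have k0 : dydx < 0 by nra.
  have k1 : dxdy < 0 by nra.
  by split; right; apply/andP; split => //; nra.
Qed.

Lemma hv_elbow_meets_diag p q : ~ I p -> ~ I q -> p.1 <> q.1 -> p.2 <> q.2 ->
  (exists z, elbow_hv p q z /\ I z) -> (exists z, elbow_vh p q z /\ I z) ->
  exists w, elbow_hv p q w /\ diag w.
Proof.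
move=> np nq n1 n2 [z [Lz Iz]] [z' [Lz' Iz']]; apply: contrapT => nD.
have [Ik hc vc] := hv_corner_interior np nq nD Lz Iz.
have [/andP [ak bk] /andP [ck dk]] := interior_in_rect Hbox Ik.
have sH : diag_x p.2 != q.1.
  apply/eqP => e; apply: nD; exists (q.1, p.2).
  split; first by left; split => //; apply: between_right.
  by rewrite -e; apply: diag_at_height; apply/andP; split; apply: ltW.
have sV : diag_y q.1 != p.2.
  apply/eqP => e; apply: nD; exists (q.1, p.2).
  split; first by left; split => //; apply: between_right.
  by rewrite -e; apply: diag_at_abscissa; apply/andP; split; apply: ltW.
have [A B] := hv_corner_sides (introN eqP n1) (introN eqP n2) sH sV hc vc.
case: Lz' => [[zx bz]|[bz zy]].
- have nb : ~ between p.2 (diag_y z'.1) q.2 by rewrite zx /between; lra.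
  case: (vchord_end_interior Iz' bz nb) => [[h _]|[_ h]].
  + by apply: np; rewrite (surjective_pairing p) -zx.
  + by move: h; rewrite zx /between; lra.
- have nb : ~ between p.1 (diag_x z'.2) q.1 by rewrite zy /between; lra.
  case: (hchord_end_interior Iz' bz nb) => [[_ h]|[h _]].
  + by move: h; rewrite zy /between; lra.
  + by apply: nq; rewrite (surjective_pairing q) -zy.
Qed.

Definition blocked p q := forall s, shortest_rpath p q s -> at_most_one_corner p s ->
  trace p s `&` I !=set0.

Lemma blocked_elbow_meets_diag p q s : ~ I p -> ~ I q -> p.1 <> q.1 -> p.2 <> q.2 ->
  blocked p q -> shortest_rpath p q s -> at_most_one_corner p s ->
  exists w, trace p s w /\ diag w.
Proof.
move=> np nq n1 n2 blk sh am.
have [sL1 aL1 tL1] := elbow_hv_path n1 n2; have [sL2 aL2 tL2] := elbow_vh_path n1 n2.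
have [z1 [/tL1 t1 I1]] := blk _ sL1 aL1; have [z2 [/tL2 t2 I2]] := blk _ sL2 aL2.
have E1 : exists z, elbow_hv p q z /\ I z by exists z1.
have E2 : exists z, elbow_vh p q z /\ I z by exists z2.
case: (shortest_one_corner_elbow sh am n1 n2) => Ls.
- have [w [Lw Dw]] := hv_elbow_meets_diag np nq n1 n2 E1 E2.
  by exists w; split => //; apply: Ls.
- rewrite -elbow_hvC in Ls E2; rewrite elbow_hvC in E1.
  have [w [Lw Dw]] := hv_elbow_meets_diag nq np (nesym n1) (nesym n2) E2 E1.
  by exists w; split => //; apply: Ls.
Qed.

Lemma blocked_meets_diag p q s : ~ I p -> ~ I q -> blocked p q ->
  shortest_rpath p q s -> at_most_one_corner p s -> exists w, trace p s w /\ diag w.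
Proof.
move=> np nq blk sh am.
have [epq|npq] := eqVneq p q.
  have [sh0 am0 tr0] := nil_path p; rewrite -epq in blk.
  by have [z [/tr0 -> Iz]] := blk [::] sh0 am0; case: np.
have [e2|n2] := eqVneq p.2 q.2.
  have [sh1 am1 tr1] := hsegment_path e2 (elimN eqP npq).
  have [z [/tr1 [bz zy] Iz]] := blk _ sh1 am1.
  have [_ /andP [c1 c2]] := interior_in_rect Hbox Iz.
  exists (diag_x p.2, p.2); split.
    exact: (shortest_hor_trace sh e2 (hsegment_meets_diag np nq e2 Iz zy bz)).
  by apply: diag_at_height; apply/andP; rewrite -zy; split; apply: ltW.
have [e1|n1] := eqVneq p.1 q.1.
  have [sh1 am1 tr1] := vsegment_path e1 (elimN eqP npq).
  have [z [/tr1 [zx bz] Iz]] := blk _ sh1 am1.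
  have [/andP [c1 c2] _] := interior_in_rect Hbox Iz.
  exists (p.1, diag_y p.1); split.
    exact: (shortest_ver_trace sh e1 (vsegment_meets_diag np nq e1 Iz zx bz)).
  by apply: diag_at_abscissa; apply/andP; rewrite -zx; split; apply: ltW.
exact: (blocked_elbow_meets_diag np nq (elimN eqP n1) (elimN eqP n2) blk sh am).
Qed.

Lemma skeleton_diag : skeleton om [:: ((a, y0), (b, y1))].
Proof.
split.
  move=> ab; rewrite inE => /eqP -> /=; split => // - [e _].
  by move: hab; rewrite e ltxx.
move=> p q np nq blk s sh am; exists ((a, y0), (b, y1)); first by rewrite inE.
by have [w [tw dw]] := blocked_meets_diag np nq blk sh am; exists w.
Qed.

Lemma empty_not_skeleton : (exists z, I z) -> ~ skeleton om [::].
Proof.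
move=> [z Iz] [_ sk]; have [/andP [za zb] _] := interior_in_rect Hbox Iz.
pose p := (a - 1, z.2); pose q := (b + 1, z.2).
have np : ~ I p by move=> /interior_subset /Hbox [/andP [h _] _]; move: h => /=; lra.
have nq : ~ I q by move=> /interior_subset /Hbox [/andP [_ h] _]; move: h => /=; lra.
have npq : p <> q by move=> /(f_equal fst) /=; lra.
have [sh1 am1 _] := @hsegment_path _ p q erefl npq.
have blk : blocked p q.
  move=> s sh _; exists z; split => //; rewrite (surjective_pairing z).
  by apply: (shortest_hor_trace sh erefl); left; apply/andP; split => /=; lra.
by have [] := sk p q np nq blk _ sh1 am1.
Qed.

End Diagonal.

Section SpanningSegment.
Variable R : realType.
Variable om : set (pt R).
Implicit Types (u v w : pt R).

Lemma is_bbox_spanned u v : om u -> om v ->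
  (forall w, om w -> between u.1 w.1 v.1 /\ between u.2 w.2 v.2) ->
  is_bbox om (Num.min u.1 v.1) (Num.max u.1 v.1) (Num.min u.2 v.2) (Num.max u.2 v.2).
Proof.
move=> omu omv span; split.
  move=> w /span []; rewrite /rect /between => h1 h2.
  by split; apply/andP; split; rewrite ?ge_min ?le_max; apply/orP; lra.
move=> a' b' c' d' H w [/andP [+ +] /andP [+ +]]; rewrite !ge_min !le_max => w1 w2 w3 w4.
have [/andP [u1 u2] /andP [u3 u4]] := H u omu; have [/andP [v1 v2] /andP [v3 v4]] := H v omv.
by split; apply/andP; split; [case/orP: w1|case/orP: w2|case/orP: w3|case/orP: w4]; lra.
Qed.

Lemma has_diagonal_spanned u v : seg u v `<=` om ->
  (forall w, om w -> between u.1 w.1 v.1 /\ between u.2 w.2 v.2) -> has_diagonal om.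
Proof.
wlog le_uv : u v / u.1 <= v.1 => [hwlog|] suv span.
  have [le_uv|lt_vu] := leP u.1 v.1; first exact: hwlog le_uv suv span.
  apply: (hwlog v u); rewrite 1?seg_sym ?(ltW lt_vu) // => w /span [].
  by split; apply: between_sym.
have omu : om u by apply: suv; apply: seg_start.
have omv : om v by apply: suv; apply: seg_end.
have bb := is_bbox_spanned omu omv span.
rewrite (min_l le_uv) (max_r le_uv) in bb.
have [le2|lt2] := leP u.2 v.2.
- rewrite (min_l le2) (max_r le2) in bb.
  by exists u.1, v.1, u.2, v.2; split => //; left; rewrite -!surjective_pairing.
- rewrite (min_r (ltW lt2)) (max_l (ltW lt2)) in bb.
  by exists u.1, v.1, v.2, u.2; split => //; right; rewrite -!surjective_pairing.
Qed.

End SpanningSegment.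

Section Region.
Variable R : realType.
Variable vs : seq (pt R).
Hypothesis Hvs : rect_obstacle vs.
Local Notation om := (region vs).
Local Notation M := (vtx_bound vs).
Implicit Types (u v w z : pt R).

Lemma far_not_interior z : M < `|z.1| \/ M < `|z.2| -> ~ om° z.
Proof. by move=> far /interior_subset /(region_bounded Hvs) []; lra. Qed.

Lemma skeleton_seg_y u v z : skeleton om [:: (u, v)] -> om° z -> between u.2 z.2 v.2.
Proof.
move=> [_ sk] Iz; have [+ _] := region_bounded Hvs (interior_subset Iz).
rewrite ler_norml => /andP [zx1 zx2].
pose p := (- M - 1, z.2); pose q := (M + 1, z.2).
have np : ~ om° p by apply: far_not_interior; left; rewrite ltr0_norm /=; lra.
have nq : ~ om° q by apply: far_not_interior; left; rewrite gtr0_norm /=; lra.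
have npq : p <> q by move=> /(f_equal fst) /=; lra.
have [sh1 am1 tr1] := @hsegment_path _ p q erefl npq.
have blk : blocked om p q.
  move=> s sh _; exists z; split => //; rewrite (surjective_pairing z).
  by apply: (shortest_hor_trace sh erefl); left; apply/andP; split => /=; lra.
have [ab] := sk p q np nq blk _ sh1 am1; rewrite inE => /eqP -> [w [/tr1 [_ wy] sw]].
by have [_] := seg_between sw; rewrite wy.
Qed.

Lemma skeleton_seg_x u v z : skeleton om [:: (u, v)] -> om° z -> between u.1 z.1 v.1.
Proof.
move=> [_ sk] Iz; have [_ +] := region_bounded Hvs (interior_subset Iz).
rewrite ler_norml => /andP [zy1 zy2].
pose p := (z.1, - M - 1); pose q := (z.1, M + 1).
have np : ~ om° p by apply: far_not_interior; right; rewrite ltr0_norm /=; lra.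
have nq : ~ om° q by apply: far_not_interior; right; rewrite gtr0_norm /=; lra.
have npq : p <> q by move=> /(f_equal snd) /=; lra.
have [sh1 am1 tr1] := @vsegment_path _ p q erefl npq.
have blk : blocked om p q.
  move=> s sh _; exists z; split => //; rewrite (surjective_pairing z).
  by apply: (shortest_ver_trace sh erefl); left; apply/andP; split => /=; lra.
have [ab] := sk p q np nq blk _ sh1 am1; rewrite inE => /eqP -> [w [/tr1 [wx _] sw]].
by have [+ _] := seg_between sw; rewrite wx.
Qed.

Lemma one_segment_skeleton_diagonal u v : skeleton om [:: (u, v)] -> has_diagonal om.
Proof.
move=> sk; have [uv suv] := sk.1 (u, v) (mem_head _ _).
apply: (has_diagonal_spanned suv) => w rw; split; apply: between_closed => e e0;
  have [z [Iz [h1 h2]]] := region_interior_dense Hvs rw e0.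
- by exists z.1 => //; apply: skeleton_seg_x sk Iz.
- by exists z.2 => //; apply: skeleton_seg_y sk Iz.
Qed.

Lemma region_interior_nonempty : exists z, om° z.
Proof.
have r0 : om (vtx vs 0) by left; exists 0%N; [exact: size_gt0|exact: seg_start].
by have [z [Iz _]] := region_interior_dense Hvs r0 ltr01; exists z.
Qed.

Lemma diagonal_min_skeleton_size : rect_convex om -> has_diagonal om ->
  forall S, min_skeleton om S -> size S = 1%N.
Proof.
move=> Hc [a [b [c [d [[Hbox _] dg]]]]] S [skS minS].
have [z Iz] := region_interior_nonempty.
have [/andP [za zb] /andP [zc zd]] := interior_in_rect Hbox Iz.
have hab : a < b by lra.
have hcd : c < d by lra.
have [D skD] : exists D, skeleton om [:: D].
  case: dg => [[_ [_ HD]]|[_ [_ HD]]].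
  - by exists ((a, c), (b, d)); apply: (skeleton_diag Hc hab hcd) => //; left.
  - by exists ((a, d), (b, c)); apply: (skeleton_diag Hc hab hcd) => //; right.
have := minS _ skD; case: S skS {minS} => [|? [|? ?]] skS //= _.
by case: (empty_not_skeleton Hbox (ex_intro _ z Iz)).
Qed.

End Region.

Theorem lemma5 (R : realType) (vs : seq (pt R)) :
  rect_obstacle vs -> rect_convex (region vs) ->
  forall S : seq (pt R * pt R), min_skeleton (region vs) S ->
  (size S = 1%N <-> has_diagonal (region vs)).
Proof.
move=> Hvs Hc S mS; split; last by move=> hd; apply: diagonal_min_skeleton_size hd S mS.
by case: S mS => [|[u v] [|? ?]] // [skS _] _; apply: one_segment_skeleton_diagonal skS.
Qed.
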